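(* Let $d\in\mathbb{N}$, $\mathbf{s}=(s_1,\dots,s_d)\in\mathbb{N}^d$ and $y\in(-\pi/2,\pi/2)$. Let $l_1(n)\in\{2n,2n+1,2n-1\}$ and $l_2(n),\dots,l_d(n)\in\{2n,2n+1\}$. Then for every integer $n\ge0$, \[ \sum_{n_1>\cdots>n_d>n}\frac{a_{n_1}(\sin y)}{l_1(n_1)^{s_1}\cdots l_d(n_d)^{s_d}}=\int_0^y\lambda_{l_1,s_1}\circ\cdots\circ\lambda_{l_d,s_d}\circ\overleftarrow{a_n(\sin t)} , \] and for every $x\in(-1,1)$, \[ \sum_{n_1>\cdots>n_d>n}\frac{a_{n_1}(x)}{l_1(n_1)^{s_1}\cdots l_d(n_d)^{s_d}}=\int_0^x\Lambda_{l_1,s_1}\circ\cdots\circ\Lambda_{l_d,s_d}\circ\overleftarrow{a_n(t)} , \] where $\Lambda_{l,s}$ is obtained from $\lambda_{l,s}$ by the substitution $t\to\sin^{-1}t$.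
   Context: $\mathbb{N}=\{1,2,\dots\}$. Set $a_0(x)=1$, $a_n(x)=\frac{1}{4^n}\binom{2n}{n}x^{2n}$ for $n\ge1$. Iterated integrals: $\int_0^y f_1(t)dt\circ\cdots\circ f_r(t)dt:=\int_{y>t_1>\cdots>t_r>0}f_1(t_1)\cdots f_r(t_r)dt_1\cdots dt_r$; juxtaposition of 1-forms means $\circ$; $(\omega)^k$ is $\omega$ repeated $k$ times ($k=0$: empty); expressions are expanded by linearity (e.g. $\omega\circ(\alpha-\beta\circ\gamma)=\omega\circ\alpha-\omega\circ\beta\circ\gamma$). $d(\sec t)=\sec t\tan t\,dt$. For a function $F$: $f_1(t)dt\circ\overleftarrow{F(t)}\circ f_2(t)dt:=F(t)f_1(t)dt\circ f_2(t)dt$ (and likewise when $\overleftarrow{F}$ stands at the end: it multiplies the preceding 1-form), while $\int_0^y\overleftarrow{F(t)}\circ f_1(t)dt\circ\cdots\circ f_r(t)dt:=F(y)\int_0^y f_1(t)dt\circ\cdots\circ f_r(t)dt$. With $F_s=(\cot t\,dt)^{s-1}$ define $\lambda_{2n,s}(t)=F_s\,(\tan t\,dt-\csc t\,dt\ d(\sec t))$, $\lambda_{2n+1,s}(t)=\overleftarrow{\csc t}\circ F_s\,(\sin t\tan t\,dt-dt\ d(\sec t))$, $\lambda_{2n-1,1}(t)=\overleftarrow{\cos t}\circ\tan t\sec t\,dt$, $\lambda_{2n-1,s}(t)=\overleftarrow{\sin t}\circ F_{s-1}\,\frac{dt}{\tan^2 t}\,\tan t\sec t\,dt$ for $s\ge2$.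 The substitution $t\to\sin^{-1}t$ replaces each function $F(t)$ by $F(\sin^{-1}t)$ and each 1-form $f(t)dt$ by $f(\sin^{-1}t)\,dt/\sqrt{1-t^2}$. *)

From Stdlib Require Import Reals List.
From Coquelicot Require Import Coquelicot.
Import ListNotations.
Open Scope R_scope.

Definition a_coef (n : nat) (x : R) : R :=
  match n with
  | O => 1
  | S _ => Binomial.C (2 * n) n / 4 ^ n * x ^ (2 * n)
  end.

Inductive Kind : Type := L2n | L2n1 | L2nm1.

Definition lval (k : Kind) (m : nat) : R :=
  match k with
  | L2n => 2 * INR m
  | L2n1 => 2 * INR m + 1
  | L2nm1 => 2 * INR m - 1
  end.

Fixpoint sum_between (f : nat -> R) (m N : nat) : R :=
  match N with
  | O => 0
  | S N' => sum_between f m N' + (if Nat.ltb m N' then f N' else 0)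
  end.

(* msum [w_1; ...; w_d] m N = sum_{N > n_1 > ... > n_d > m} w_1(n_1) ... w_d(n_d) *)
Fixpoint msum (ws : list (nat -> R)) (m N : nat) : R :=
  match ws with
  | [] => 1
  | w :: ws' => sum_between (fun k => w k * msum ws' m k) m N
  end.

Definition weights (x : R) (ks : list (Kind * nat)) : list (nat -> R) :=
  match ks with
  | [] => []
  | (k1, s1) :: rest =>
      (fun m => a_coef m x / lval k1 m ^ s1)
        :: map (fun p => fun m => 1 / lval (fst p) m ^ (snd p)) rest
  end.

Definition lhs_partial (x : R) (ks : list (Kind * nat)) (n N : nat) : R :=
  msum (weights x ks) n N.

(* Form f  is the 1-form f(t)dt ; Mul F  is  <-F(t) (overleftarrow) *)
Inductive letter : Type :=
  | Form (f : R -> R)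
  | Mul (F : R -> R).

Definition word := list letter.

(* Iterated integral with the paper's conventions:
   int_0^y f_1 dt o ... o f_r dt = int_0^y f_1(t_1) (int_0^{t_1} f_2 ... ) dt_1 ;
   a leading <-F multiplies by F(y); <-F after a 1-form multiplies that 1-form. *)
Fixpoint iint (w : word) (y : R) : R :=
  match w with
  | [] => 1
  | Mul F :: w' => F y * iint w' y
  | Form f :: w' => RInt (fun t => f t * iint w' t) 0 y
  end.

Definition lin := list (R * word).

Definition comp (A B : lin) : lin :=
  flat_map (fun cw => map (fun cw' => (fst cw * fst cw', snd cw ++ snd cw')) B) A.

Definition lin_iint (A : lin) (y : R) : R :=
  fold_right (fun cw acc => fst cw * iint (snd cw) y + acc) 0 A.

Definition cotf (t : R) : R := cos t / sin t.
Definition cscf (t : R) : R := 1 / sin t.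
Definition secf (t : R) : R := 1 / cos t.
Definition dsec (t : R) : R := secf t * tan t.          (* d(sec t) = sec t tan t dt *)
Definition tansec (t : R) : R := tan t * secf t.

Definition Fs (s : nat) : word := repeat (Form cotf) (s - 1).

Definition lam (k : Kind) (s : nat) : lin :=
  match k with
  | L2n =>
      [ (1, Fs s ++ [Form tan]);
        (-1, Fs s ++ [Form cscf; Form dsec]) ]
  | L2n1 =>
      [ (1, Mul cscf :: Fs s ++ [Form (fun t => sin t * tan t)]);
        (-1, Mul cscf :: Fs s ++ [Form (fun _ => 1); Form dsec]) ]
  | L2nm1 =>
      match s with
      | 1%nat => [ (1, [Mul cos; Form tansec]) ]
      | _ => [ (1, Mul sin :: Fs (s - 1) ++
                   [Form (fun t => 1 / tan t ^ 2); Form tansec]) ]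
      end
  end.

Definition lam_word (ks : list (Kind * nat)) : lin :=
  fold_right (fun p acc => comp (lam (fst p) (snd p)) acc) [(1, [])] ks.

Definition subst_letter (l : letter) : letter :=
  match l with
  | Form f => Form (fun t => f (asin t) / sqrt (1 - t ^ 2))
  | Mul F => Mul (fun t => F (asin t))
  end.

Definition subst_lin (A : lin) : lin :=
  map (fun cw => (fst cw, map subst_letter (snd cw))) A.

Definition rhs_sin (ks : list (Kind * nat)) (n : nat) (y : R) : R :=
  lin_iint (comp (lam_word ks) [(1, [Mul (fun t => a_coef n (sin t))])]) y.

Definition rhs_x (ks : list (Kind * nat)) (n : nat) (x : R) : R :=
  lin_iint (comp (subst_lin (lam_word ks)) [(1, [Mul (fun t => a_coef n t)])]) x.

From Pilot Require Import Defs.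
From Stdlib Require Import Reals List Lia Lra FunctionalExtensionality.
From Coquelicot Require Import Coquelicot.
Import ListNotations.
Open Scope R_scope.

(* Write sin_series c t = sum_k c_k a_k(sin t) = sum_k c_k binom(2k,k) 4^-k sin^2k t.
   The truncated multiple sum is a partial sum of sin_series c y, where c is obtained
   from the indicator of n by applying g |-> (k |-> sum_(j<k) g_j / l_i(k)^s_i) for
   i = d, ..., 1.  On the other side each lambda_(l,s) maps sin_series g to
   sin_series (lam_coef l s g); this follows from three closed forms obtained by
   differentiating power series:
     int_0^y cot t  sin_series g = sin_series (g_k / 2k) y,
     int_0^y cos t  sin_series g = sin y  sin_series (g_k / (2k+1)) y,
     int_0^y d(sec t) sin_series g = sin^2 y / cos y  sin_series g y
                                     - cos y  sin_series (sum_(j<k) g_j) y.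
   Composing these needs the iterated integrals to be linear in their innermost
   integrand and compatible with t = asin u, although cot, csc and 1/tan^2 have poles
   at 0.  Each letter maps a class of functions with a prescribed order of vanishing
   at 0 into another one, and this keeps every integrand continuous across 0.  The
   identity in x follows from the one in y by the substitution y = asin x. *)

(** * Central binomial coefficients and polynomially bounded sequences *)

Definition cbinom (k : nat) : R := Binomial.C (2 * k) k / 4 ^ k.

Lemma cbinom_0 : cbinom 0 = 1.
Proof. unfold cbinom, Binomial.C; simpl; field. Qed.

Lemma cbinom_S k : cbinom (S k) = cbinom k * (2 * INR k + 1) / (2 * INR k + 2).
Proof.
  unfold cbinom, Binomial.C.
  replace (2 * S k - S k)%nat with (S k) by lia.
  replace (2 * k - k)%nat with k by lia.
  replace (2 * S k)%nat with (S (S (2 * k))) by lia.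
  rewrite !fact_simpl, !mult_INR, !S_INR, mult_INR; simpl (INR 2); simpl pow.
  pose proof (INR_fact_neq_0 k); pose proof (INR_fact_neq_0 (2 * k)); pose proof (pos_INR k).
  assert (4 ^ k <> 0) by (apply pow_nonzero; lra).
  field; repeat split; lra.
Qed.

Lemma cbinom_pos k : 0 < cbinom k.
Proof.
  induction k as [|k IH]; [rewrite cbinom_0; lra|].
  rewrite cbinom_S; pose proof (pos_INR k).
  apply Rdiv_lt_0_compat; [apply Rmult_lt_0_compat|]; lra.
Qed.

Lemma cbinom_le_1 k : cbinom k <= 1.
Proof.
  induction k as [|k IH]; [rewrite cbinom_0; lra|].
  rewrite cbinom_S; pose proof (pos_INR k); pose proof (cbinom_pos k).
  apply Rle_div_l; [lra|]; nra.
Qed.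

Lemma a_coef_cbinom k x : a_coef k x = cbinom k * (x ^ 2) ^ k.
Proof. destruct k; [simpl; rewrite cbinom_0; ring|now rewrite <- pow_mult]. Qed.

Definition poly_bounded (c : nat -> R) : Prop :=
  exists M p, forall k, Rabs (c k) <= M * (INR k + 1) ^ p.

Lemma poly_bound_nonneg (c : nat -> R) M p :
  (forall k, Rabs (c k) <= M * (INR k + 1) ^ p) -> 0 <= M.
Proof.
  intros H; specialize (H O); simpl in H; rewrite Rplus_0_l, pow1, Rmult_1_r in H.
  pose proof (Rabs_pos (c O)); lra.
Qed.

Lemma poly_bounded_dominated (g h : nat -> R) (f : nat -> nat) (A : R) (q : nat) :
  poly_bounded g -> 0 <= A -> (forall k, (f k <= S k)%nat) ->
  (forall k, Rabs (h k) <= A * (INR k + 1) ^ q * Rabs (g (f k))) -> poly_bounded h.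
Proof.
  intros [M [p Hg]] HA Hf Hh.
  exists (A * M * 2 ^ p), (q + p)%nat; intros k.
  pose proof (pos_INR k).
  assert (Hgf : Rabs (g (f k)) <= M * 2 ^ p * (INR k + 1) ^ p).
  { apply Rle_trans with (1 := Hg (f k)); rewrite Rmult_assoc, <- Rpow_mult_distr.
    apply Rmult_le_compat_l; [exact (poly_bound_nonneg g M p Hg)|].
    apply pow_incr; split; [pose proof (pos_INR (f k)); lra|].
    specialize (Hf k); apply le_INR in Hf; rewrite S_INR in Hf; lra. }
  apply Rle_trans with (1 := Hh k); rewrite pow_add.
  replace (A * M * 2 ^ p * ((INR k + 1) ^ q * (INR k + 1) ^ p))
    with (A * (INR k + 1) ^ q * (M * 2 ^ p * (INR k + 1) ^ p)) by ring.
  apply Rmult_le_compat_l; [|exact Hgf].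
  apply Rmult_le_pos; [exact HA|apply pow_le; lra].
Qed.

Lemma poly_bounded_ext (g h : nat -> R) :
  (forall k, g k = h k) -> poly_bounded g -> poly_bounded h.
Proof. intros E [M [p H]]; exists M, p; intros k; rewrite <- E; apply H. Qed.

Lemma poly_bounded_plus (g h : nat -> R) :
  poly_bounded g -> poly_bounded h -> poly_bounded (fun k => g k + h k).
Proof.
  intros [M1 [p1 H1]] [M2 [p2 H2]].
  exists (M1 + M2), (p1 + p2)%nat; intros k.
  pose proof (pos_INR k).
  assert (Hp1 : (INR k + 1) ^ p1 <= (INR k + 1) ^ (p1 + p2)) by (apply Rle_pow; lia || lra).
  assert (Hp2 : (INR k + 1) ^ p2 <= (INR k + 1) ^ (p1 + p2)) by (apply Rle_pow; lia || lra).
  pose proof (poly_bound_nonneg g M1 p1 H1); pose proof (poly_bound_nonneg h M2 p2 H2).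
  specialize (H1 k); specialize (H2 k).
  apply Rle_trans with (1 := Rabs_triang _ _); nra.
Qed.

Lemma poly_bounded_scal (c : R) (g : nat -> R) :
  poly_bounded g -> poly_bounded (fun k => c * g k).
Proof.
  intros Hg; apply (poly_bounded_dominated g _ (fun k => k) (Rabs c) 0); auto.
  - apply Rabs_pos.
  - intros k; rewrite Rabs_mult; simpl; lra.
Qed.

Lemma poly_bounded_div (g d : nat -> R) :
  poly_bounded g -> (forall k, g k = 0 \/ 1 <= Rabs (d k)) ->
  poly_bounded (fun k => g k / d k).
Proof.
  intros Hg Hd; apply (poly_bounded_dominated g _ (fun k => k) 1 0); auto; try lra.
  intros k; simpl; rewrite !Rmult_1_l.
  destruct (Hd k) as [H0|H1].
  - rewrite H0; unfold Rdiv; rewrite Rmult_0_l, Rabs_R0; lra.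
  - unfold Rdiv; rewrite Rabs_mult, Rabs_inv.
    pose proof (Rabs_pos (g k)).
    assert (/ Rabs (d k) <= 1) by (rewrite <- Rinv_1; apply Rinv_le_contravar; lra).
    assert (0 <= / Rabs (d k)) by (apply Rlt_le, Rinv_0_lt_compat; lra).
    nra.
Qed.

Lemma poly_bounded_mul_INR (g : nat -> R) :
  poly_bounded g -> poly_bounded (fun k => INR k * g k).
Proof.
  intros Hg; apply (poly_bounded_dominated g _ (fun k => k) 1 1); auto; try lra.
  intros k; rewrite Rabs_mult, Rabs_pos_eq by apply pos_INR; simpl.
  pose proof (pos_INR k); pose proof (Rabs_pos (g k)); nra.
Qed.

Definition delta (n k : nat) : R := if Nat.eqb k n then 1 else 0.

Lemma poly_bounded_delta (n : nat) : poly_bounded (delta n).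
Proof.
  exists 1, O; intros k; unfold delta; simpl.
  destruct (Nat.eqb k n); rewrite ?Rabs_R1, ?Rabs_R0; lra.
Qed.

Fixpoint psum (g : nat -> R) (k : nat) : R :=
  match k with O => 0 | S j => psum g j + g j end.

Definition lam_coef (l : Kind) (s : nat) (g : nat -> R) (k : nat) : R :=
  psum g k / lval l k ^ s.

Definition mul_sin2_coef (c : nat -> R) (k : nat) : R :=
  match k with O => 0 | S j => c j * cbinom j / cbinom (S j) end.

Definition div_sin2_coef (c : nat -> R) (k : nat) : R :=
  c (S k) * cbinom (S k) / cbinom k.

Definition deriv_coef (c : nat -> R) (k : nat) : R := (2 * INR k + 1) / 2 * c (S k).

Lemma poly_bounded_psum (g : nat -> R) : poly_bounded g -> poly_bounded (psum g).
Proof.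
  intros [M [p H]]; pose proof (poly_bound_nonneg g M p H) as HM.
  exists M, (S p).
  assert (Hle : forall k, Rabs (psum g k) <= INR k * M * (INR k + 1) ^ p).
  { induction k as [|k IH]; simpl psum; [rewrite Rabs_R0; simpl; lra|].
    apply Rle_trans with (1 := Rabs_triang _ _).
    pose proof (pos_INR k); rewrite S_INR.
    assert (Hp : (INR k + 1) ^ p <= (INR k + 1 + 1) ^ p) by (apply pow_incr; lra).
    assert (0 <= INR k * M) by (apply Rmult_le_pos; lra).
    pose proof (Rmult_le_compat_l _ _ _ H1 Hp); pose proof (Rmult_le_compat_l _ _ _ HM Hp).
    specialize (H k); lra. }
  intros k; apply Rle_trans with (1 := Hle k); simpl.
  pose proof (pos_INR k); pose proof (pow_le (INR k + 1) p ltac:(lra)); nra.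
Qed.

Lemma poly_bounded_mul_sin2_coef (c : nat -> R) :
  poly_bounded c -> poly_bounded (mul_sin2_coef c).
Proof.
  intros Hc; apply (poly_bounded_dominated c _ pred 2 0); auto; try lra; [intros; lia|].
  intros [|k]; simpl; [rewrite Rabs_R0; pose proof (Rabs_pos (c O)); lra|].
  rewrite cbinom_S; pose proof (pos_INR k); pose proof (cbinom_pos k).
  replace (c k * cbinom k / (cbinom k * (2 * INR k + 1) / (2 * INR k + 2)))
    with (c k * ((2 * INR k + 2) / (2 * INR k + 1))) by (field; lra).
  rewrite Rabs_mult, (Rabs_pos_eq (_ / _)) by (apply Rlt_le, Rdiv_lt_0_compat; lra).
  assert ((2 * INR k + 2) / (2 * INR k + 1) <= 2) by (apply Rle_div_l; lra).
  pose proof (Rabs_pos (c k)); nra.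
Qed.

Lemma div_sin2_coefE (c : nat -> R) k :
  div_sin2_coef c k = (2 * INR k + 1) / (2 * INR k + 2) * c (S k).
Proof.
  unfold div_sin2_coef; rewrite cbinom_S; pose proof (pos_INR k); pose proof (cbinom_pos k).
  field; lra.
Qed.

Lemma poly_bounded_div_sin2_coef (c : nat -> R) :
  poly_bounded c -> poly_bounded (div_sin2_coef c).
Proof.
  intros Hc; apply (poly_bounded_dominated c _ S 1 0); auto; try lra.
  intros k; rewrite div_sin2_coefE, Rabs_mult; simpl; pose proof (pos_INR k).
  rewrite (Rabs_pos_eq (_ / _)) by (apply Rlt_le, Rdiv_lt_0_compat; lra).
  assert ((2 * INR k + 1) / (2 * INR k + 2) <= 1) by (apply Rle_div_l; lra).
  pose proof (Rabs_pos (c (S k))); nra.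
Qed.

Lemma poly_bounded_deriv_coef (c : nat -> R) :
  poly_bounded c -> poly_bounded (deriv_coef c).
Proof.
  intros Hc; apply (poly_bounded_dominated c _ S 1 1); auto; try lra.
  intros k; unfold deriv_coef; rewrite Rabs_mult; pose proof (pos_INR k).
  rewrite (Rabs_pos_eq (_ / _)) by lra; simpl.
  pose proof (Rabs_pos (c (S k))); nra.
Qed.

Lemma mul_sin2_coef_div (c : nat -> R) : c O = 0 ->
  forall k, mul_sin2_coef (div_sin2_coef c) k = c k.
Proof.
  intros H0 [|k]; unfold mul_sin2_coef, div_sin2_coef; [auto|].
  pose proof (cbinom_pos k); pose proof (cbinom_pos (S k)); field; lra.
Qed.

Lemma CV_radius_ge_1_of_poly_bound p : forall (a : nat -> R) M,
  (forall k, Rabs (a k) <= M * (INR k + 1) ^ p) -> Rbar_le 1 (CV_radius a).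
Proof.
  induction p as [|p IH]; intros a M H.
  - apply CV_radius_bounded; exists M; intros n; rewrite pow1, Rmult_1_r.
    specialize (H n); simpl in H; lra.
  - (* [a] is the termwise derivative of [e], whose bound has one degree less. *)
    pose proof (poly_bound_nonneg a M (S p) H) as HM.
    set (e := fun k => match k with O => 0 | S j => a j / INR (S j) end).
    assert (Hd : forall k, PS_derive e k = a k).
    { intros k; unfold PS_derive, e; field; apply not_0_INR; lia. }
    rewrite <- (CV_radius_ext _ _ Hd), CV_radius_derive.
    apply (IH e M); intros [|j]; unfold e; cbv beta iota.
    + rewrite Rabs_R0; apply Rmult_le_pos; [lra|apply pow_le; simpl; lra].
    + specialize (H j); simpl in H; rewrite S_INR; pose proof (pos_INR j).
      unfold Rdiv; rewrite Rabs_mult, Rabs_inv, (Rabs_pos_eq (INR j + 1)) by lra.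
      apply Rle_div_l; [lra|]; apply Rle_trans with (1 := H).
      assert (Hp : (INR j + 1) ^ p <= (INR j + 1 + 1) ^ p) by (apply pow_incr; lra).
      assert (HMj : 0 <= M * (INR j + 1)) by (apply Rmult_le_pos; lra).
      pose proof (Rmult_le_compat_l _ _ _ HMj Hp); nra.
Qed.

Lemma CV_radius_sin_series_ge_1 (c : nat -> R) :
  poly_bounded c -> Rbar_le 1 (CV_radius (fun k => c k * cbinom k)).
Proof.
  intros [M [p H]]; apply (CV_radius_ge_1_of_poly_bound p _ M); intros k.
  rewrite Rabs_mult, (Rabs_pos_eq (cbinom k)) by apply Rlt_le, cbinom_pos.
  pose proof (cbinom_le_1 k); pose proof (cbinom_pos k); pose proof (Rabs_pos (c k)).
  apply Rle_trans with (2 := H k); nra.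
Qed.

Definition inI (t : R) : Prop := - (PI / 2) < t < PI / 2.

Lemma inI_0 : inI 0.
Proof. unfold inI; pose proof PI_RGT_0; lra. Qed.

Lemma cos_pos_inI t : inI t -> 0 < cos t.
Proof. intros [H1 H2]; apply cos_gt_0; lra. Qed.

Lemma sin_neq0_inI t : inI t -> t <> 0 -> sin t <> 0.
Proof.
  intros [H1 H2] Ht.
  destruct (Rlt_or_le 0 t).
  - assert (0 < sin t) by (apply sin_gt_0; lra); lra.
  - assert (sin t < 0) by (apply sin_lt_0_var; lra); lra.
Qed.

Lemma sin2_lt_1_inI t : inI t -> Rabs (sin t ^ 2) < 1.
Proof.
  intros Ht; pose proof (cos_pos_inI t Ht); pose proof (sin2_cos2 t); unfold Rsqr in *.
  rewrite Rabs_pos_eq by apply pow2_ge_0; nra.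
Qed.

Lemma inI_between a b x : inI a -> inI b -> Rmin a b <= x <= Rmax a b -> inI x.
Proof.
  intros [H1 H2] [H3 H4] [H5 H6]; unfold Rmin, Rmax in *.
  destruct (Rle_dec a b); split; lra.
Qed.

Lemma inI_between0 y x : inI y -> Rmin 0 y <= x <= Rmax 0 y -> inI x.
Proof. apply inI_between, inI_0. Qed.

Lemma inI_between0_open y x : inI y -> Rmin 0 y < x < Rmax 0 y -> inI x /\ x <> 0.
Proof.
  intros Hy Hx; split; [apply (inI_between0 y x Hy); lra|].
  unfold Rmin, Rmax in Hx; destruct (Rle_dec 0 y); lra.
Qed.

Lemma locally_inI t : inI t -> locally t inI.
Proof.
  intros [H1 H2].
  assert (Hd : 0 < Rmin (t + PI / 2) (PI / 2 - t)) by (apply Rmin_pos; lra).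
  exists (mkposreal _ Hd); intros u Hu; cbn in Hu.
  unfold AbsRing_ball, abs, minus, plus, opp in Hu; simpl in Hu; apply Rabs_def2 in Hu.
  pose proof (Rmin_l (t + PI / 2) (PI / 2 - t)); pose proof (Rmin_r (t + PI / 2) (PI / 2 - t)).
  unfold inI, minus, plus, opp in *; simpl in *; lra.
Qed.

Lemma inI_asin u : -1 < u < 1 -> inI (asin u).
Proof. apply asin_bound_lt. Qed.

(* [RInt_ext] at type [R], so that the pointwise goals are ring equations. *)
Lemma RInt_ext_R (f g : R -> R) a b :
  (forall x, Rmin a b < x < Rmax a b -> f x = g x) -> RInt f a b = RInt g a b.
Proof. apply RInt_ext. Qed.

Definition cont_I (f : R -> R) : Prop := forall t, inI t -> continuous f t.

Lemma continuous_tan_inI t : inI t -> continuous tan t.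
Proof. intros Ht; apply continuous_tan, Rgt_not_eq, cos_pos_inI, Ht. Qed.

Lemma continuous_secf t : inI t -> continuous secf t.
Proof.
  intros Ht; apply (continuous_mult (fun _ => 1) (fun t => / cos t)); [apply continuous_const|].
  apply continuous_Rinv_comp; [apply continuous_cos|apply Rgt_not_eq, cos_pos_inI, Ht].
Qed.

Lemma continuous_pow_comp (f : R -> R) n x :
  continuous f x -> continuous (fun t => f t ^ n) x.
Proof.
  intros Hf; induction n as [|n IH]; [apply continuous_const|].
  apply (continuous_mult f (fun t => f t ^ n)); assumption.
Qed.

Ltac cont_tac :=
  repeat match goal with
  | |- continuous _ _ => assumption
  | H : cont_I ?f |- continuous ?f _ => apply H; try assumption
  | H : cont_I ?f |- continuous (fun t => ?f t) _ => apply H; try assumption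
  | |- continuous (fun _ => ?c) _ => apply continuous_const
  | |- continuous sin _ => apply continuous_sin
  | |- continuous (fun t => sin t) _ => apply continuous_sin
  | |- continuous cos _ => apply continuous_cos
  | |- continuous (fun t => cos t) _ => apply continuous_cos
  | |- continuous (fun t => tan t) _ => apply continuous_tan_inI; try assumption
  | |- continuous (fun t => secf t) _ => apply continuous_secf; try assumption
  | |- continuous (fun t => @?f t * @?g t) _ => apply (continuous_mult f g)
  | |- continuous (fun t => @?f t + @?g t) _ => apply (continuous_plus f g)
  | |- continuous (fun t => @?f t - @?g t) _ => apply (continuous_minus f g)
  | |- continuous (fun t => / @?f t) _ => apply (continuous_Rinv_comp f)
  | |- continuous (fun t => @?f t ^ ?n) _ => apply (continuous_pow_comp f n)
  | |- continuous (fun t => @?f t / @?g t) _ =>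
      apply (continuous_mult f (fun t => / g t))
  end.

Lemma cont_I_ext (f g : R -> R) :
  (forall t, inI t -> f t = g t) -> cont_I f -> cont_I g.
Proof.
  intros E Hf t Ht; apply (continuous_ext_loc g f t); [|exact (Hf t Ht)].
  generalize (locally_inI t Ht); apply filter_imp; exact E.
Qed.
(** * Power series in sin^2 t *)

Definition sin_series (c : nat -> R) (t : R) : R :=
  PSeries (fun k => c k * cbinom k) (sin t ^ 2).

Section SinSeries.

Variable c : nat -> R.
Hypothesis Hc : poly_bounded c.

Lemma sin_series_inside t :
  inI t -> Rbar_lt (Rabs (sin t ^ 2)) (CV_radius (fun k => c k * cbinom k)).
Proof.
  intros Ht; apply Rbar_lt_le_trans with 1;
    [apply sin2_lt_1_inI, Ht|apply CV_radius_sin_series_ge_1, Hc].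
Qed.

Lemma ex_sin_series t : inI t -> ex_pseries (fun k => c k * cbinom k) (sin t ^ 2).
Proof. intros Ht; apply CV_radius_inside, sin_series_inside, Ht. Qed.

Lemma is_derive_sin_series t : inI t ->
  is_derive (sin_series c) t (2 * sin t * cos t * sin_series (deriv_coef c) t).
Proof.
  intros Ht; unfold sin_series.
  rewrite (PSeries_ext (fun k => deriv_coef c k * cbinom k)
             (PS_derive (fun k => c k * cbinom k))).
  2: { intros k; unfold PS_derive, deriv_coef; rewrite cbinom_S, S_INR.
       pose proof (pos_INR k); field; lra. }
  apply (is_derive_comp (PSeries (fun k => c k * cbinom k)) (fun t => sin t ^ 2)).
  - apply is_derive_PSeries, sin_series_inside, Ht.
  - auto_derive; auto; ring.
Qed.

Lemma continuous_sin_series t : inI t -> continuous (sin_series c) t.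
Proof.
  intros Ht; apply (ex_derive_continuous (K := R_AbsRing) (V := R_NormedModule)).
  eexists; apply is_derive_sin_series, Ht.
Qed.

Lemma cont_I_sin_series : cont_I (sin_series c).
Proof. intros t; apply continuous_sin_series. Qed.

Lemma ex_derive_sin_series t : inI t -> ex_derive (sin_series c) t.
Proof. intros Ht; eexists; apply is_derive_sin_series, Ht. Qed.

Lemma Derive_sin_series t : inI t ->
  Derive (sin_series c) t = 2 * sin t * cos t * sin_series (deriv_coef c) t.
Proof. intros Ht; apply is_derive_unique, is_derive_sin_series, Ht. Qed.

End SinSeries.

Lemma cont_I_Derive_sin_series c : poly_bounded c ->
  cont_I (fun t => 2 * sin t * cos t * sin_series (deriv_coef c) t).
Proof.
  intros Hc t Ht; pose proof (cont_I_sin_series _ (poly_bounded_deriv_coef c Hc)); cont_tac.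
Qed.

Lemma sin_series_ext (c d : nat -> R) t :
  (forall k, c k = d k) -> sin_series c t = sin_series d t.
Proof. intros E; apply PSeries_ext; intros k; rewrite E; reflexivity. Qed.

Lemma sin_series_scal (a : R) (c : nat -> R) t :
  a * sin_series c t = sin_series (fun k => a * c k) t.
Proof.
  unfold sin_series; rewrite <- PSeries_scal; apply PSeries_ext; intros k.
  unfold PS_scal; simpl; change (scal ?x ?y) with (x * y); ring.
Qed.

Lemma sin_series_plus (c d : nat -> R) t : poly_bounded c -> poly_bounded d -> inI t ->
  sin_series c t + sin_series d t = sin_series (fun k => c k + d k) t.
Proof.
  intros Hc Hd Ht; unfold sin_series; rewrite <- PSeries_plus
    by (apply ex_sin_series; assumption).
  apply PSeries_ext; intros k; unfold PS_plus; change (plus ?x ?y) with (x + y); ring.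
Qed.

Lemma sin_series_mul_sin2 (c : nat -> R) t :
  sin t ^ 2 * sin_series c t = sin_series (mul_sin2_coef c) t.
Proof.
  unfold sin_series; rewrite <- PSeries_incr_1; apply PSeries_ext.
  intros [|k]; unfold PS_incr_1, mul_sin2_coef; simpl; [change (zero : R) with 0; ring|].
  pose proof (cbinom_pos (S k)); field; lra.
Qed.

Lemma sin_series_deriv_coef (c : nat -> R) t :
  sin t ^ 2 * sin_series (deriv_coef c) t = sin_series (fun k => INR k * c k) t.
Proof.
  rewrite sin_series_mul_sin2; apply sin_series_ext.
  intros [|k]; unfold mul_sin2_coef, deriv_coef; [simpl; ring|].
  rewrite cbinom_S, S_INR; pose proof (pos_INR k); pose proof (cbinom_pos k).
  field; lra.
Qed.

Lemma sin_series_at_0 (c : nat -> R) : sin_series c 0 = c O.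
Proof.
  unfold sin_series; rewrite sin_0; simpl; rewrite Rmult_0_l, PSeries_0, cbinom_0; ring.
Qed.

Lemma is_RInt_derive_inI (F dF f : R -> R) y : inI y ->
  (forall t, inI t -> is_derive F t (dF t)) -> cont_I dF ->
  (forall t, inI t -> t <> 0 -> f t = dF t) -> is_RInt f 0 y (F y - F 0).
Proof.
  intros Hy HD HC E.
  apply (is_RInt_ext dF).
  - intros x Hx; destruct (inI_between0_open y x Hy Hx); symmetry; auto.
  - apply (is_RInt_derive F dF 0 y); intros x Hx;
      [apply HD|apply HC]; apply (inI_between0 y); assumption.
Qed.

Lemma is_RInt_cot_sin_series c y : poly_bounded c -> c O = 0 -> inI y ->
  is_RInt (fun t => cotf t * sin_series c t) 0 y
    (sin_series (fun k => c k / (2 * INR k)) y).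
Proof.
  intros Hc H0 Hy.
  set (c' := fun k => c k / (2 * INR k)).
  assert (Hc' : poly_bounded c').
  { apply poly_bounded_div; [exact Hc|]; intros [|k]; [left; exact H0|right].
    rewrite S_INR, Rabs_pos_eq; pose proof (pos_INR k); lra. }
  replace (sin_series c' y) with (sin_series c' y - sin_series c' 0)
    by (rewrite sin_series_at_0; unfold c'; rewrite H0; unfold Rdiv; ring).
  apply (is_RInt_derive_inI _ _ _ y Hy (is_derive_sin_series c' Hc')
           (cont_I_Derive_sin_series c' Hc')).
  intros t Ht Ht0; pose proof (sin_neq0_inI t Ht Ht0).
  replace (2 * sin t * cos t * sin_series (deriv_coef c') t)
    with (cos t / sin t * (2 * (sin t ^ 2 * sin_series (deriv_coef c') t))) by (field; auto).
  rewrite sin_series_deriv_coef, (sin_series_scal 2); unfold cotf; f_equal.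
  apply sin_series_ext; intros [|k]; unfold c'; [rewrite H0; simpl; ring|].
  rewrite S_INR; pose proof (pos_INR k); field; lra.
Qed.

Lemma is_RInt_cos_sin_series c y : poly_bounded c -> inI y ->
  is_RInt (fun t => cos t * sin_series c t) 0 y
    (sin y * sin_series (fun k => c k / (2 * INR k + 1)) y).
Proof.
  intros Hc Hy.
  set (c' := fun k => c k / (2 * INR k + 1)).
  assert (Hc' : poly_bounded c').
  { apply poly_bounded_div; [exact Hc|]; intros k; right.
    rewrite Rabs_pos_eq; pose proof (pos_INR k); lra. }
  replace (sin y * sin_series c' y) with (sin y * sin_series c' y - sin 0 * sin_series c' 0)
    by (rewrite sin_0; ring).
  apply (is_RInt_derive_inI (fun t => sin t * sin_series c' t) (fun t => cos t * sin_series c t));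
    auto.
  - intros t Ht; auto_derive; [eexists; apply is_derive_sin_series; auto|].
    rewrite Derive_sin_series by auto.
    transitivity (cos t * (sin_series c' t + 2 * (sin t ^ 2 * sin_series (deriv_coef c') t)));
      [ring|].
    rewrite sin_series_deriv_coef, (sin_series_scal 2), sin_series_plus; auto.
    2: apply poly_bounded_scal, poly_bounded_mul_INR, Hc'.
    f_equal; apply sin_series_ext; intros k; unfold c'; pose proof (pos_INR k); field; lra.
  - intros t Ht; pose proof (cont_I_sin_series c Hc); cont_tac.
Qed.

Ltac poly_bounded_tac :=
  repeat first
    [ assumption
    | apply poly_bounded_plus | apply poly_bounded_scal | apply poly_bounded_mul_INR
    | apply poly_bounded_psum | apply poly_bounded_deriv_coef
    | apply poly_bounded_mul_sin2_coef | apply poly_bounded_div_sin2_coef ].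

Lemma sin2_plus_cos2 t : sin t ^ 2 + cos t ^ 2 = 1.
Proof. rewrite <- (sin2_cos2 t); unfold Rsqr; ring. Qed.

Lemma sin_series_psum_identity c t : poly_bounded c -> inI t ->
  sin_series c t + sin_series (psum c) t
    + 2 * (sin t ^ 2 * sin_series (deriv_coef c) t)
    + 2 * (sin t ^ 2 * sin_series (deriv_coef (psum c)) t)
  = 2 * sin_series (deriv_coef (psum c)) t.
Proof.
  intros Hc Ht.
  rewrite !sin_series_deriv_coef, !(sin_series_scal 2), !sin_series_plus
    by (auto; poly_bounded_tac).
  apply sin_series_ext; intros k; unfold deriv_coef; simpl psum; field.
Qed.

Lemma is_RInt_dsec_sin_series c y : poly_bounded c -> inI y ->
  is_RInt (fun t => dsec t * sin_series c t) 0 y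
    (sin y ^ 2 / cos y * sin_series c y - cos y * sin_series (psum c) y).
Proof.
  intros Hc Hy; pose proof (poly_bounded_psum c Hc) as HG.
  set (F := fun t => sin t ^ 2 / cos t * sin_series c t - cos t * sin_series (psum c) t).
  replace (sin y ^ 2 / cos y * sin_series c y - cos y * sin_series (psum c) y)
    with (F y - F 0)
    by (unfold F; rewrite sin_0, cos_0, !sin_series_at_0; simpl; field;
        apply Rgt_not_eq, cos_pos_inI, Hy).
  apply (is_RInt_derive_inI F (fun t => dsec t * sin_series c t)); auto.
  - intros t Ht; pose proof (cos_pos_inI t Ht); unfold F.
    auto_derive; [repeat split; auto using ex_derive_sin_series; lra|].
    rewrite !Derive_sin_series by auto.
    pose proof (sin_series_psum_identity c t Hc Ht) as K; pose proof (sin2_plus_cos2 t) as Z.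
    set (s := sin t) in *; set (co := cos t) in *.
    set (P := sin_series c t) in *; set (Q := sin_series (psum c) t) in *.
    set (D := sin_series (deriv_coef c) t) in *.
    set (E := sin_series (deriv_coef (psum c)) t) in *.
    (* The difference of the two sides is a combination of [K] and [Z]. *)
    transitivity (s / co ^ 2 * P
      + s * (P + Q + 2 * (s ^ 2 * D) + 2 * (s ^ 2 * E) - 2 * E)
      - 2 * s * E * (s ^ 2 + co ^ 2 - 1) + s * P * (s ^ 2 + co ^ 2 - 1) / co ^ 2);
      [field; lra|].
    rewrite K, Z; unfold dsec, secf, tan; fold s co; field; lra.
  - intros t Ht; pose proof (cont_I_sin_series c Hc); unfold dsec; cont_tac.
Qed.

Lemma cos_mul_dsec_integral c t : poly_bounded c -> inI t ->
  cos t * (sin t ^ 2 / cos t * sin_series c t - cos t * sin_series (psum c) t)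
  = sin_series (lam_coef L2nm1 1 c) t.
Proof.
  intros Hc Ht; pose proof (cos_pos_inI t Ht); pose proof (sin2_plus_cos2 t).
  transitivity (sin t ^ 2 * sin_series c t - cos t ^ 2 * sin_series (psum c) t); [field; lra|].
  replace (cos t ^ 2) with (1 - sin t ^ 2) by lra.
  transitivity (sin t ^ 2 * (sin_series c t + sin_series (psum c) t)
                + -1 * sin_series (psum c) t); [ring|].
  rewrite sin_series_plus, sin_series_mul_sin2, sin_series_scal, sin_series_plus
    by (auto; poly_bounded_tac).
  apply sin_series_ext; intros [|k]; unfold lam_coef, mul_sin2_coef, lval; simpl psum;
    [simpl; field|].
  rewrite cbinom_S, S_INR; pose proof (pos_INR k); pose proof (cbinom_pos k); field; lra.
Qed.

(* [iintf w g y] is int_0^y w o <-g(t) in the notation of the statement. *)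
Fixpoint iintf (w : word) (g : R -> R) (y : R) : R :=
  match w with
  | [] => g y
  | Mul F :: w' => F y * iintf w' g y
  | Form f :: w' => RInt (fun t => f t * iintf w' g t) 0 y
  end.

Lemma iintf_app w1 w2 g y : iintf (w1 ++ w2) g y = iintf w1 (iintf w2 g) y.
Proof.
  revert y; induction w1 as [|[f|F] w1 IH]; intros y; simpl; auto.
  - f_equal; apply functional_extensionality; intros t; rewrite IH; reflexivity.
  - rewrite IH; reflexivity.
Qed.

Lemma iint_app w w' y : iint (w ++ w') y = iintf w (iint w') y.
Proof.
  revert y; induction w as [|[f|F] w IH]; intros y; simpl; auto.
  - f_equal; apply functional_extensionality; intros t; rewrite IH; reflexivity.
  - rewrite IH; reflexivity.
Qed.

Lemma iintf_local w g1 g2 y : (forall t, inI t -> g1 t = g2 t) -> inI y ->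
  iintf w g1 y = iintf w g2 y.
Proof.
  intros E; revert y; induction w as [|[f|F] w IH]; intros y Hy; simpl; auto.
  - apply RInt_ext; intros t Ht; destruct (inI_between0_open y t Hy Ht).
    rewrite IH; auto.
  - rewrite IH; auto.
Qed.

Lemma iintf_zero w y : iintf w (fun _ => 0) y = 0.
Proof.
  revert y; induction w as [|[f|F] w IH]; intros y; simpl; auto.
  - rewrite (RInt_ext _ (fun _ => 0)), RInt_const; [apply Rmult_0_r|].
    intros t _; rewrite IH; apply Rmult_0_r.
  - rewrite IH; apply Rmult_0_r.
Qed.

Definition lin_iintf (A : lin) (g : R -> R) (y : R) : R :=
  fold_right (fun cw acc => fst cw * iintf (snd cw) g y + acc) 0 A.

Lemma lin_iintf_app A1 A2 g y :
  lin_iintf (A1 ++ A2) g y = lin_iintf A1 g y + lin_iintf A2 g y.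
Proof. induction A1 as [|a A1 IH]; simpl; [ring|rewrite IH; ring]. Qed.

Lemma lin_iintf_local A g1 g2 y : (forall t, inI t -> g1 t = g2 t) -> inI y ->
  lin_iintf A g1 y = lin_iintf A g2 y.
Proof.
  intros E Hy; induction A as [|a A IH]; simpl; auto.
  rewrite IH, (iintf_local _ g1 g2); auto.
Qed.

Lemma lin_iint_comp_Mul A F y :
  lin_iint (Defs.comp A [(1, [Mul F])]) y = lin_iintf A F y.
Proof.
  induction A as [|a A IH]; simpl; auto.
  rewrite IH, iint_app; simpl.
  replace (fun t => F t * 1) with F by (apply functional_extensionality; intros; ring).
  rewrite Rmult_1_r; reflexivity.
Qed.

(** * Continuous extensions across 0 *)

(* Integrands such as [cotf t * g t] take junk values at [t = 0] ([cotf 0 = cos 0 / 0 = 0]),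
   so they are only required to agree with [E] off 0. *)
Definition cont_extension (h E : R -> R) : Prop :=
  cont_I E /\ forall t, inI t -> t <> 0 -> E t = h t.

Definition C1_vanishing (g d : R -> R) : Prop :=
  (forall t, inI t -> is_derive g t (d t)) /\ cont_I d /\ g 0 = 0.

(* Orders of vanishing at 0 that compensate the poles of the letters: [vanish1 g] makes
   [g / sin] continuous, [vanish2 g] moreover makes [int_0^y g / sin] vanish to second
   order, and [tansec_primitive g] makes [g / tan^2] continuous. *)
Definition vanish1 (g : R -> R) : Prop := exists d, C1_vanishing g d.

Definition vanish2 (g : R -> R) : Prop := exists d, C1_vanishing g d /\ d 0 = 0.

Definition tansec_primitive (g : R -> R) : Prop :=
  exists h, cont_I h /\ forall y, inI y -> g y = RInt (fun t => tansec t * h t) 0 y.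

Lemma cont_I_vanish1 g : vanish1 g -> cont_I g.
Proof.
  intros [d [Hd _]] t Ht; apply (ex_derive_continuous (K := R_AbsRing) (V := R_NormedModule)).
  exists (d t); apply Hd, Ht.
Qed.

Lemma vanish2_vanish1 g : vanish2 g -> vanish1 g.
Proof. intros [d [Hd _]]; exists d; exact Hd. Qed.

Lemma cont_I_vanish2 g : vanish2 g -> cont_I g.
Proof. intros Hg; apply cont_I_vanish1, vanish2_vanish1, Hg. Qed.

Lemma ex_RInt_cont_I E a b : cont_I E -> inI a -> inI b -> ex_RInt E a b.
Proof.
  intros HE Ha Hb; apply (ex_RInt_continuous (V := R_CompleteNormedModule)).
  intros z Hz; apply HE, (inI_between a b); assumption.
Qed.

Lemma ex_RInt_cont_extension h E y : cont_extension h E -> inI y -> ex_RInt h 0 y.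
Proof.
  intros [HE Eh] Hy; apply (ex_RInt_ext E); [|apply ex_RInt_cont_I; auto using inI_0].
  intros x Hx; destruct (inI_between0_open y x Hy Hx); auto.
Qed.

Lemma C1_vanishing_RInt h E : cont_extension h E ->
  C1_vanishing (fun y => RInt h 0 y) E.
Proof.
  intros [HE Eh]; split; [|split; [exact HE|exact (RInt_point 0 h)]].
  intros t Ht; apply (is_derive_ext_loc (RInt E 0)).
  - generalize (locally_inI t Ht); apply filter_imp; intros y Hy.
    apply RInt_ext; intros x Hx; destruct (inI_between0_open y x Hy Hx); auto.
  - apply (is_derive_RInt E (RInt E 0) 0 t); [|apply HE, Ht].
    generalize (locally_inI t Ht); apply filter_imp; intros y Hy.
    apply (RInt_correct (V := R_CompleteNormedModule)), ex_RInt_cont_I; auto using inI_0.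
Qed.

Lemma RInt_asin_change (f g gx E : R -> R) x :
  cont_extension (fun t => f t * g t) E ->
  (forall u, -1 < u < 1 -> gx u = g (asin u)) -> -1 < x < 1 ->
  RInt (fun u => f (asin u) / sqrt (1 - u ^ 2) * gx u) 0 x
  = RInt (fun t => f t * g t) 0 (asin x).
Proof.
  intros [HE Eh] Hgx Hx; pose proof (inI_asin x Hx) as Hax.
  set (K := fun u => E (asin u) / sqrt (1 - u ^ 2)).
  assert (Hsqrt : forall u, -1 < u < 1 -> 0 < sqrt (1 - u ^ 2))
    by (intros; apply sqrt_lt_R0; nra).
  transitivity (RInt K 0 x).
  { apply RInt_ext_R; intros u Hu.
    assert (Hu1 : -1 < u < 1 /\ u <> 0)
      by (unfold Rmin, Rmax in Hu; destruct (Rle_dec 0 x); split; try lra; intro; lra).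
    destruct Hu1 as [Hu1 Hu0]; unfold K; rewrite Hgx by exact Hu1; rewrite Eh.
    - field; apply Rgt_not_eq, Hsqrt, Hu1.
    - apply inI_asin, Hu1.
    - intros Ha; apply Hu0; rewrite <- (sin_asin u), Ha, sin_0 by lra; reflexivity. }
  transitivity (RInt E 0 (asin x)).
  2: { apply RInt_ext; intros t Ht; destruct (inI_between0_open _ t Hax Ht); auto. }
  replace (RInt K 0 x) with (RInt K (sin 0) (sin (asin x))) by (rewrite sin_0, sin_asin; lra).
  rewrite <- (RInt_comp K sin cos).
  - apply RInt_ext_R; intros t Ht; destruct (inI_between0_open _ t Hax Ht) as [Ht1 _].
    pose proof (cos_pos_inI t Ht1).
    unfold K; rewrite asin_sin by (destruct Ht1; lra).
    replace (1 - sin t ^ 2) with (cos t ^ 2) by (pose proof (sin2_plus_cos2 t); lra).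
    rewrite sqrt_pow2 by lra; change (scal ?a ?b) with (a * b); field; lra.
  - intros t Ht; pose proof (inI_between0 _ t Hax Ht) as Ht1.
    assert (Hs : -1 < sin t < 1)
      by (pose proof (sin2_lt_1_inI t Ht1); rewrite Rabs_pos_eq in * by apply pow2_ge_0; nra).
    unfold K; apply (continuous_mult (fun u => E (asin u)) (fun u => / sqrt (1 - u ^ 2))).
    + apply continuous_comp; [|rewrite asin_sin by (destruct Ht1; lra); apply HE, Ht1].
      apply continuity_pt_filterlim, derivable_continuous_pt, derivable_pt_asin; lra.
    + apply continuous_Rinv_comp; [|apply Rgt_not_eq, Hsqrt, Hs].
      apply continuous_sqrt_comp, continuity_pt_filterlim; reg.
  - intros t _; split; [auto_derive; auto; ring|apply continuous_cos].
Qed.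

Definition fill0 (h : R -> R) (v : R) (t : R) : R := if Req_EM_T t 0 then v else h t.

Lemma fill0_0 h v : fill0 h v 0 = v.
Proof. unfold fill0; destruct (Req_EM_T 0 0); [reflexivity|contradiction]. Qed.

Lemma punctured_inI (P : R -> Prop) :
  (forall t, inI t -> t <> 0 -> P t) -> Rbar_locally' 0 P.
Proof.
  intros H; change (locally 0 (fun t => t <> 0 -> P t)).
  generalize (locally_inI 0 inI_0); apply filter_imp; intros t Ht Ht0; apply H; assumption.
Qed.

Lemma locally_neq0 t : t <> 0 -> locally t (fun u => u <> 0).
Proof.
  intros Ht; exists (mkposreal _ (Rabs_pos_lt t Ht)); intros u Hu Hu0; subst u.
  cbn in Hu; unfold AbsRing_ball, abs, minus, plus, opp in Hu; simpl in Hu.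
  rewrite Rplus_0_l, Rabs_Ropp in Hu; lra.
Qed.

Lemma cont_extension_fill0 (h : R -> R) (v : R) :
  (forall t, inI t -> t <> 0 -> continuous h t) -> is_lim h 0 v ->
  cont_extension h (fill0 h v).
Proof.
  intros Hh Hlim; split.
  2: { intros t _ Ht0; unfold fill0; destruct (Req_EM_T t 0); [contradiction|reflexivity]. }
  intros t Ht; destruct (Req_EM_T t 0) as [->|Ht0].
  - apply continuity_pt_filterlim, continuity_pt_filterlim'.
    rewrite fill0_0.
    apply (is_lim_ext_loc h _ 0 v); [|exact Hlim].
    apply punctured_inI; intros u _ Hu0; unfold fill0.
    destruct (Req_EM_T u 0); [contradiction|reflexivity].
  - apply (continuous_ext_loc _ h); [|apply Hh; assumption].
    generalize (locally_neq0 t Ht0); apply filter_imp; intros u Hu0; unfold fill0.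
    destruct (Req_EM_T u 0); [contradiction|reflexivity].
Qed.

Lemma is_lim_derive_quotient0 (f : R -> R) l :
  is_derive f 0 l -> is_lim (fun t => (f t - f 0) / t) 0 l.
Proof.
  intros Hf; apply is_derive_Reals in Hf; apply is_lim_Reals_1.
  intros eps Heps; destruct (Hf eps Heps) as [d Hd]; exists d; split; [apply cond_pos|].
  intros t [Ht0 Hdt]; simpl in *; unfold R_dist in *; rewrite Rminus_0_r in Hdt.
  specialize (Hd t Ht0 Hdt); rewrite Rplus_0_l in Hd; exact Hd.
Qed.

Lemma cont_extension_div_sin g d : C1_vanishing g d ->
  cont_extension (fun t => g t / sin t) (fill0 (fun t => g t / sin t) (d 0)).
Proof.
  intros [Hd [_ H0]]; apply cont_extension_fill0.
  - intros t Ht Ht0; pose proof (sin_neq0_inI t Ht Ht0).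
    assert (continuous g t)
      by (apply (ex_derive_continuous (K := R_AbsRing) (V := R_NormedModule));
          eexists; apply Hd, Ht).
    cont_tac; assumption.
  - replace (Finite (d 0)) with (Rbar_div (d 0) 1) by (simpl; f_equal; field).
    apply (is_lim_ext_loc (fun t => ((g t - g 0) / t) / (sin t / t))).
    + apply punctured_inI; intros t Ht Ht0; pose proof (sin_neq0_inI t Ht Ht0).
      rewrite H0; field; auto.
    + apply is_lim_div; [apply is_lim_derive_quotient0, Hd, inI_0|apply is_lim_sinc_0| |].
      * injection 1; lra.
      * simpl; auto.
Qed.

Lemma is_RInt_tansec a b : inI a -> inI b -> is_RInt tansec a b (secf b - secf a).
Proof.
  intros Ha Hb; apply (is_RInt_derive secf tansec); intros x Hx;
    pose proof (inI_between a b x Ha Hb Hx) as HxI; pose proof (cos_pos_inI x HxI).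
  - unfold tansec, secf, tan; auto_derive; [lra|field; lra].
  - unfold tansec; cont_tac.
Qed.

Lemma tansecE u : inI u -> tansec u = sin u / (cos u * cos u).
Proof.
  intros Hu; pose proof (cos_pos_inI u Hu); unfold tansec, secf, tan; field; lra.
Qed.

Lemma tansec_nonneg u : inI u -> 0 <= u -> 0 <= tansec u.
Proof.
  intros Hu Hu0; rewrite tansecE by exact Hu; pose proof (cos_pos_inI u Hu).
  destruct Hu; apply Rdiv_le_0_compat; [apply sin_ge_0|]; nra.
Qed.

Lemma tansec_nonpos u : inI u -> u <= 0 -> tansec u <= 0.
Proof.
  intros Hu Hu0; rewrite tansecE by exact Hu; pose proof (cos_pos_inI u Hu).
  destruct Hu; assert (0 <= sin (- u)) by (apply sin_ge_0; lra).
  rewrite sin_neg in *; unfold Rdiv.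
  assert (0 < / (cos u * cos u)) by (apply Rinv_0_lt_compat; nra); nra.
Qed.

Lemma secf_gt_1 t : inI t -> t <> 0 -> 1 < secf t.
Proof.
  intros Ht Ht0; pose proof (cos_pos_inI t Ht); pose proof (sin_neq0_inI t Ht Ht0).
  pose proof (sin2_plus_cos2 t); pose proof (COS_bound t).
  assert (cos t <> 1) by (intros E; rewrite E in *; apply H0; nra).
  unfold secf; apply Rlt_div_r; lra.
Qed.

Lemma abs_RInt_le_weight (f w : R -> R) a b W M :
  a <= b -> (forall x, a <= x <= b -> Rabs (f x) <= M * w x) ->
  ex_RInt f a b -> is_RInt w a b W -> Rabs (RInt f a b) <= M * W.
Proof.
  intros Hab Hf Xf Hw.
  apply (norm_RInt_le f (fun x => M * w x) a b); auto.
  - apply (RInt_correct (V := R_CompleteNormedModule)), Xf.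
  - apply (is_RInt_scal (V := R_CompleteNormedModule)), Hw.
Qed.

Lemma abs_RInt_tansec_le (k : R -> R) t eps : inI t -> cont_I k ->
  (forall u, Rmin 0 t <= u <= Rmax 0 t -> Rabs (k u) <= eps) ->
  Rabs (RInt (fun u => tansec u * k u) 0 t) <= eps * (secf t - 1).
Proof.
  intros Ht Hk Hb.
  assert (X : ex_RInt (fun u => tansec u * k u) 0 t).
  { apply ex_RInt_cont_I; auto using inI_0.
    intros u Hu; pose proof (continuous_secf u Hu); unfold tansec; cont_tac. }
  pose proof (is_RInt_tansec 0 t inI_0 Ht) as HI.
  unfold secf at 2 in HI; rewrite cos_0, Rdiv_1 in HI.
  destruct (Rle_or_lt 0 t) as [Ht0|Ht0].
  - apply (abs_RInt_le_weight _ tansec 0 t); auto.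
    intros u Hu; pose proof (inI_between0 t u Ht ltac:(rewrite Rmin_left, Rmax_right; lra)).
    pose proof (tansec_nonneg u ltac:(assumption) ltac:(lra)).
    rewrite Rabs_mult, Rabs_pos_eq, Rmult_comm by assumption.
    apply Rmult_le_compat_r; [assumption|apply Hb; rewrite Rmin_left, Rmax_right; lra].
  - rewrite <- (opp_RInt_swap (V := R_CompleteNormedModule)) by (apply ex_RInt_swap, X).
    change (Rabs (- RInt (fun u => tansec u * k u) t 0) <= eps * (secf t - 1)).
    rewrite Rabs_Ropp.
    apply (abs_RInt_le_weight _ (fun u => - tansec u) t 0); [lra| |apply ex_RInt_swap, X|].
    + intros u Hu; pose proof (inI_between0 t u Ht ltac:(rewrite Rmin_right, Rmax_left; lra)).
      pose proof (tansec_nonpos u ltac:(assumption) ltac:(lra)).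
      rewrite Rabs_mult, Rabs_left1, Rmult_comm by assumption.
      apply Rmult_le_compat_r; [lra|].
      apply Hb; rewrite Rmin_right, Rmax_left; lra.
    + apply (is_RInt_swap (V := R_CompleteNormedModule)) in HI.
      apply (is_RInt_opp (V := R_CompleteNormedModule)) in HI.
      rewrite opp_opp in HI; exact HI.
Qed.

Lemma Rabs_between0 t u : Rmin 0 t <= u <= Rmax 0 t -> Rabs u <= Rabs t.
Proof.
  unfold Rmin, Rmax; destruct (Rle_dec 0 t); intros Hu;
    rewrite ?(Rabs_pos_eq t), ?(Rabs_left1 t) by lra; apply Rabs_le; lra.
Qed.

Lemma RInt_tansec_sub (h : R -> R) t : cont_I h -> inI t ->
  RInt (fun u => tansec u * (h u - h 0)) 0 t
  = RInt (fun u => tansec u * h u) 0 t - h 0 * (secf t - 1).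
Proof.
  intros Hh Ht.
  rewrite (RInt_ext_R _ (fun u => tansec u * h u - h 0 * tansec u)) by (intros; ring).
  apply (is_RInt_unique (V := R_CompleteNormedModule)).
  apply (is_RInt_minus (V := R_CompleteNormedModule) (fun u => tansec u * h u)).
  - apply (RInt_correct (V := R_CompleteNormedModule)), ex_RInt_cont_I; auto using inI_0.
    intros u Hu; unfold tansec; cont_tac.
  - apply (is_RInt_scal (V := R_CompleteNormedModule)).
    pose proof (is_RInt_tansec 0 t inI_0 Ht) as HI.
    unfold secf at 2 in HI; rewrite cos_0, Rdiv_1 in HI; exact HI.
Qed.

(* A weighted mean: [tansec] keeps its sign between 0 and [t] and integrates to [secf t - 1]. *)
Lemma is_lim_tansec_mean (h : R -> R) : cont_I h ->
  is_lim (fun t => RInt (fun u => tansec u * h u) 0 t / (secf t - 1)) 0 (h 0).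
Proof.
  intros Hh; apply is_lim_Reals_1; intros eps Heps.
  pose proof (Hh 0 inI_0) as Hc; apply continuity_pt_filterlim in Hc.
  destruct (Hc (eps / 2) ltac:(lra)) as [del [Hdel Hd]].
  exists (Rmin del (PI / 2)); split; [apply Rmin_pos; pose proof PI_RGT_0; lra|].
  intros t [Ht0 Hdt]; simpl in *; unfold R_dist in *; rewrite Rminus_0_r in Hdt.
  pose proof (Rmin_l del (PI / 2)); pose proof (Rmin_r del (PI / 2)).
  assert (Ht : inI t) by (apply Rabs_def2 in Hdt; unfold inI; lra).
  pose proof (secf_gt_1 t Ht Ht0).
  assert (Hk : forall u, Rmin 0 t <= u <= Rmax 0 t -> Rabs (h u - h 0) <= eps / 2).
  { intros u Hu; destruct (Req_dec u 0) as [->|Hu0]; [rewrite Rminus_diag, Rabs_R0; lra|].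
    apply Rlt_le, Hd; split; [split; [exact I|auto]|].
    simpl; unfold R_dist; rewrite Rminus_0_r; pose proof (Rabs_between0 t u Hu); lra. }
  replace (RInt (fun u => tansec u * h u) 0 t / (secf t - 1) - h 0)
    with (RInt (fun u => tansec u * (h u - h 0)) 0 t / (secf t - 1))
    by (rewrite RInt_tansec_sub by assumption; field; lra).
  unfold Rdiv; rewrite Rabs_mult, Rabs_inv, (Rabs_pos_eq (secf t - 1)) by lra.
  apply Rle_lt_trans with (eps / 2 * (secf t - 1) * / (secf t - 1)).
  - apply Rmult_le_compat_r; [apply Rlt_le, Rinv_0_lt_compat; lra|].
    apply abs_RInt_tansec_le; auto.
    intros u Hu; cont_tac.
  - field_simplify; lra.
Qed.

Lemma secf_sub1_div_tan2 t : inI t -> t <> 0 -> (secf t - 1) / tan t ^ 2 = cos t / (1 + cos t).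
Proof.
  intros Ht Ht0; pose proof (sin_neq0_inI t Ht Ht0) as Hs; pose proof (cos_pos_inI t Ht).
  pose proof (sin2_plus_cos2 t) as Z.
  assert (0 < sin t ^ 2) by (apply pow2_gt_0, Hs).
  assert (cos t <> 1) by (intros E; rewrite E in Z; lra).
  unfold secf, tan.
  replace ((1 / cos t - 1) / (sin t / cos t) ^ 2) with (cos t * (1 - cos t) / sin t ^ 2)
    by (field; split; lra).
  replace (sin t ^ 2) with ((1 - cos t) * (1 + cos t)) by lra.
  field; split; lra.
Qed.

Lemma cont_extension_cont h : cont_I h -> cont_extension h h.
Proof. intros Hh; split; auto. Qed.

Lemma cont_extension_mul F h E : cont_I F -> cont_extension h E ->
  cont_extension (fun t => F t * h t) (fun t => F t * E t).
Proof.
  intros HF [HE Eh]; split; [intros t Ht; cont_tac|intros t Ht Ht0; rewrite Eh; auto].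
Qed.

Lemma vanish1_RInt h E : cont_extension h E -> vanish1 (fun y => RInt h 0 y).
Proof. intros H; exists E; apply C1_vanishing_RInt, H. Qed.

Lemma vanish2_RInt h E : cont_extension h E -> E 0 = 0 -> vanish2 (fun y => RInt h 0 y).
Proof. intros H H0; exists E; split; [apply C1_vanishing_RInt, H|exact H0]. Qed.

Lemma cont_I_tansec_primitive g : tansec_primitive g -> cont_I g.
Proof.
  intros [h [Hh Hg]].
  apply (cont_I_ext (fun y => RInt (fun t => tansec t * h t) 0 y)); [intros; symmetry; auto|].
  apply cont_I_vanish1, (vanish1_RInt _ (fun t => tansec t * h t)), cont_extension_cont.
  intros t Ht; unfold tansec; cont_tac.
Qed.

Lemma tan_neq0_inI t : inI t -> t <> 0 -> tan t <> 0.
Proof.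
  intros Ht Ht0; pose proof (sin_neq0_inI t Ht Ht0); pose proof (cos_pos_inI t Ht).
  unfold tan; apply Rmult_integral_contrapositive; split; [auto|apply Rinv_neq_0_compat; lra].
Qed.

Lemma cont_extension_div_tan2 (g h : R -> R) : cont_I h ->
  (forall y, inI y -> g y = RInt (fun t => tansec t * h t) 0 y) ->
  cont_extension (fun t => g t / tan t ^ 2) (fill0 (fun t => g t / tan t ^ 2) (h 0 / 2)).
Proof.
  intros Hh Hg; assert (HgC : cont_I g) by (apply cont_I_tansec_primitive; exists h; auto).
  apply cont_extension_fill0.
  - intros t Ht Ht0; pose proof (tan_neq0_inI t Ht Ht0); cont_tac; apply pow_nonzero; auto.
  - replace (Finite (h 0 / 2)) with (Rbar_mult (h 0) (cos 0 / (1 + cos 0)))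
      by (simpl; rewrite cos_0; f_equal; field).
    apply (is_lim_ext_loc
      (fun t => RInt (fun u => tansec u * h u) 0 t / (secf t - 1) * (cos t / (1 + cos t)))).
    + apply punctured_inI; intros t Ht Ht0; pose proof (secf_gt_1 t Ht Ht0).
      pose proof (tan_neq0_inI t Ht Ht0).
      rewrite <- secf_sub1_div_tan2, Hg by assumption; field; split; auto; lra.
    + apply is_lim_mult; [apply is_lim_tansec_mean, Hh| |simpl; auto].
      apply (is_lim_continuity (fun t => cos t / (1 + cos t)) 0), continuity_pt_filterlim.
      change (continuous (fun t => cos t / (1 + cos t)) 0); cont_tac; rewrite cos_0; lra.
Qed.

(** * Admissible words *)

(* [RInt] is total, so linearity in the innermost integrand and the substitution
   [t = asin u] hold only for integrable integrands; [admissible w A B] asserts them for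
   innermost integrands in the class [A], which [w] maps into [B]. *)
Record admissible (w : word) (A B : (R -> R) -> Prop) : Prop := {
  admissible_maps : forall g, A g -> B (iintf w g);
  admissible_linear : forall g1 g2 c, A g1 -> A g2 -> forall y, inI y ->
    iintf w (fun t => c * g1 t + g2 t) y = c * iintf w g1 y + iintf w g2 y;
  admissible_asin : forall g gx, A g -> (forall u, -1 < u < 1 -> gx u = g (asin u)) ->
    forall x, -1 < x < 1 -> iintf (map subst_letter w) gx x = iintf w g (asin x) }.

Lemma admissible_weaken w (A B A' B' : (R -> R) -> Prop) :
  admissible w A B -> (forall g, A' g -> A g) -> (forall g, B g -> B' g) ->
  admissible w A' B'.
Proof. intros [M L S] HA HB; split; auto. Qed.

Lemma admissible_nil A : admissible [] A A.
Proof. split; simpl; auto. Qed.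

Lemma admissible_app w1 w2 A B C :
  admissible w1 B C -> admissible w2 A B -> admissible (w1 ++ w2) A C.
Proof.
  intros [M1 L1 S1] [M2 L2 S2]; split.
  - intros g Hg; replace (iintf (w1 ++ w2) g) with (iintf w1 (iintf w2 g)); auto.
    apply functional_extensionality; intros; symmetry; apply iintf_app.
  - intros g1 g2 c Hg1 Hg2 y Hy; rewrite !iintf_app, <- L1 by auto.
    apply iintf_local; auto.
  - intros g gx Hg Hgx x Hx; rewrite map_app, !iintf_app; apply S1; auto.
Qed.

Lemma admissible_Form f (A B : (R -> R) -> Prop) :
  (forall g, A g -> exists E, cont_extension (fun t => f t * g t) E /\
     B (fun y => RInt (fun t => f t * g t) 0 y)) ->
  admissible [Form f] A B.
Proof.
  intros H; split; simpl.
  - intros g Hg; destruct (H g Hg) as [E [_ HB]]; exact HB.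
  - intros g1 g2 c Hg1 Hg2 y Hy.
    destruct (H g1 Hg1) as [E1 [HE1 _]]; destruct (H g2 Hg2) as [E2 [HE2 _]].
    pose proof (ex_RInt_cont_extension _ _ y HE1 Hy) as X1.
    pose proof (ex_RInt_cont_extension _ _ y HE2 Hy) as X2.
    rewrite (RInt_ext_R _ (fun t => c * (f t * g1 t) + f t * g2 t)) by (intros; ring).
    apply (is_RInt_unique (V := R_CompleteNormedModule)).
    apply (is_RInt_plus (V := R_CompleteNormedModule) (fun t => c * (f t * g1 t)));
      [apply (is_RInt_scal (V := R_CompleteNormedModule))|];
      apply (RInt_correct (V := R_CompleteNormedModule)); assumption.
  - intros g gx Hg Hgx x Hx; destruct (H g Hg) as [E [HE _]].
    apply (RInt_asin_change f g gx E); auto.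
Qed.

Lemma admissible_Mul F (A B : (R -> R) -> Prop) :
  (forall g, A g -> B (fun y => F y * g y)) -> admissible [Mul F] A B.
Proof.
  intros H; split; simpl; auto.
  - intros; ring.
  - intros g gx Hg Hgx x Hx; rewrite Hgx; auto.
Qed.

Lemma cont_I_lin_iintf (B : lin) g :
  (forall cw, In cw B -> cont_I (iintf (snd cw) g)) -> cont_I (lin_iintf B g).
Proof.
  induction B as [|b B IH]; intros HB t Ht.
  - apply continuous_const.
  - change (continuous (fun y => fst b * iintf (snd b) g y + lin_iintf B g y) t).
    pose proof (HB b (or_introl eq_refl)) as Hb.
    assert (cont_I (lin_iintf B g)) by (apply IH; intros; apply HB; right; auto).
    cont_tac.
Qed.

Lemma iintf_lin_iintf w (B : lin) g y : admissible w cont_I cont_I ->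
  (forall cw, In cw B -> cont_I (iintf (snd cw) g)) -> inI y ->
  fold_right (fun cw acc => fst cw * iintf w (iintf (snd cw) g) y + acc) 0 B
  = iintf w (lin_iintf B g) y.
Proof.
  intros Hw; induction B as [|b B IH]; intros HB Hy; simpl.
  - symmetry; apply iintf_zero.
  - assert (HB' : forall cw, In cw B -> cont_I (iintf (snd cw) g))
      by (intros; apply HB; right; assumption).
    rewrite IH, <- (admissible_linear _ _ _ Hw) by auto using cont_I_lin_iintf, in_eq.
    reflexivity.
Qed.

Lemma lin_iintf_comp (A B : lin) g y :
  (forall cw, In cw A -> admissible (snd cw) cont_I cont_I) ->
  (forall cw, In cw B -> cont_I (iintf (snd cw) g)) -> inI y ->
  lin_iintf (Defs.comp A B) g y = lin_iintf A (lin_iintf B g) y.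
Proof.
  intros HA HB Hy; induction A as [|a A IH]; simpl; auto.
  change (Defs.comp (a :: A) B)
    with (map (fun cw' => (fst a * fst cw', snd a ++ snd cw')) B ++ Defs.comp A B).
  rewrite lin_iintf_app, IH by (intros; apply HA; right; assumption).
  rewrite <- iintf_lin_iintf by auto using in_eq.
  f_equal; clear IH HB; induction B as [|b B IHB]; simpl; [ring|].
  rewrite iintf_app, IHB, Rmult_plus_distr_l, Rmult_assoc; reflexivity.
Qed.
Lemma admissible_Form_cont f : cont_I f -> f 0 = 0 -> admissible [Form f] cont_I vanish2.
Proof.
  intros Hf Hf0; apply admissible_Form; intros g Hg.
  assert (HE : cont_extension (fun t => f t * g t) (fun t => f t * g t))
    by (apply cont_extension_cont; intros t Ht; cont_tac).
  exists (fun t => f t * g t); split; [exact HE|].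
  apply (vanish2_RInt _ _ HE); cbv beta; rewrite Hf0; ring.
Qed.

Lemma admissible_Form_1 : admissible [Form (fun _ => 1)] vanish1 vanish2.
Proof.
  apply admissible_Form; intros g Hg; pose proof (cont_I_vanish1 g Hg) as HgC.
  assert (HE : cont_extension (fun t => 1 * g t) g) by (split; auto; intros; ring).
  exists g; split; [exact HE|apply (vanish2_RInt _ _ HE)].
  destruct Hg as [d [_ [_ H0]]]; exact H0.
Qed.

Lemma admissible_Form_tansec : admissible [Form tansec] cont_I tansec_primitive.
Proof.
  apply admissible_Form; intros g Hg; exists (fun t => tansec t * g t); split.
  - apply cont_extension_cont; intros t Ht; unfold tansec; cont_tac.
  - exists g; split; auto.
Qed.

Lemma admissible_Mul_cont F : cont_I F -> admissible [Mul F] cont_I cont_I.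
Proof. intros HF; apply admissible_Mul; intros g Hg t Ht; cont_tac. Qed.

Lemma cont_extension_cot g d : C1_vanishing g d ->
  cont_extension (fun t => cotf t * g t) (fun t => cos t * fill0 (fun t => g t / sin t) (d 0) t).
Proof.
  intros Hd.
  destruct (cont_extension_mul cos _ _ (fun t _ => continuous_cos t)
              (cont_extension_div_sin g d Hd)) as [HE Eh].
  split; [exact HE|intros t Ht Ht0; rewrite Eh by auto; unfold cotf; field].
  apply sin_neq0_inI; auto.
Qed.

Lemma admissible_Form_cot1 : admissible [Form cotf] vanish1 vanish1.
Proof.
  apply admissible_Form; intros g [d Hd]; pose proof (cont_extension_cot g d Hd) as HE.
  eexists; split; [exact HE|apply (vanish1_RInt _ _ HE)].
Qed.

Lemma admissible_Form_cot2 : admissible [Form cotf] vanish2 vanish2.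
Proof.
  apply admissible_Form; intros g [d [Hd Hd0]]; pose proof (cont_extension_cot g d Hd) as HE.
  eexists; split; [exact HE|apply (vanish2_RInt _ _ HE)].
  cbv beta; rewrite fill0_0, Hd0; ring.
Qed.

Lemma admissible_Form_csc : admissible [Form cscf] vanish2 vanish2.
Proof.
  apply admissible_Form; intros g [d [Hd Hd0]].
  destruct (cont_extension_div_sin g d Hd) as [HE Eh].
  assert (HE' : cont_extension (fun t => cscf t * g t) (fill0 (fun t => g t / sin t) (d 0))).
  { split; [exact HE|intros t Ht Ht0; rewrite Eh by auto; unfold cscf; field].
    apply sin_neq0_inI; auto. }
  eexists; split; [exact HE'|apply (vanish2_RInt _ _ HE')].
  rewrite fill0_0; exact Hd0.
Qed.

Lemma admissible_Mul_csc : admissible [Mul cscf] vanish2 cont_I.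
Proof.
  apply admissible_Mul; intros g [d [Hd Hd0]].
  destruct (cont_extension_div_sin g d Hd) as [HE Eh].
  apply (cont_I_ext (fill0 (fun t => g t / sin t) (d 0))); [|exact HE].
  intros t Ht; destruct (Req_dec t 0) as [->|Ht0].
  - destruct Hd as [_ [_ H0]]; rewrite fill0_0, Hd0, H0; ring.
  - rewrite Eh by auto; unfold cscf; field; apply sin_neq0_inI; auto.
Qed.

Lemma admissible_Form_itan2 :
  admissible [Form (fun t => 1 / tan t ^ 2)] tansec_primitive vanish1.
Proof.
  apply admissible_Form; intros g [h [Hh Hg]].
  destruct (cont_extension_div_tan2 g h Hh Hg) as [HE Eh].
  assert (HE' : cont_extension (fun t => 1 / tan t ^ 2 * g t)
                  (fill0 (fun t => g t / tan t ^ 2) (h 0 / 2))).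
  { split; [exact HE|intros t Ht Ht0; rewrite Eh by auto; field].
    apply tan_neq0_inI; auto. }
  eexists; split; [exact HE'|apply (vanish1_RInt _ _ HE')].
Qed.

Lemma admissible_cons l w A B C :
  admissible [l] B C -> admissible w A B -> admissible (l :: w) A C.
Proof. apply (admissible_app [l] w). Qed.

Lemma admissible_repeat l A m : admissible [l] A A -> admissible (repeat l m) A A.
Proof.
  intros H; induction m as [|m IH]; [apply admissible_nil|apply (admissible_cons _ _ _ A); auto].
Qed.

Lemma admissible_cot1 m : admissible (repeat (Form cotf) m) vanish1 vanish1.
Proof. apply admissible_repeat, admissible_Form_cot1. Qed.

Lemma admissible_cot2 m : admissible (repeat (Form cotf) m) vanish2 vanish2.
Proof. apply admissible_repeat, admissible_Form_cot2. Qed.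

Lemma cont_I_dsec : cont_I dsec.
Proof. intros t Ht; unfold dsec; cont_tac. Qed.

Lemma cont_I_tansec : cont_I tansec.
Proof. intros t Ht; unfold tansec; cont_tac. Qed.

Lemma dsec_0 : dsec 0 = 0.
Proof. unfold dsec; rewrite tan_0; ring. Qed.

Lemma admissible_Form_dsec : admissible [Form dsec] cont_I vanish2.
Proof. apply admissible_Form_cont; [exact cont_I_dsec|exact dsec_0]. Qed.

Lemma admissible_Form_tan : admissible [Form tan] cont_I vanish2.
Proof. apply admissible_Form_cont; [exact continuous_tan_inI|exact tan_0]. Qed.

Lemma admissible_Form_sin_tan : admissible [Form (fun t => sin t * tan t)] cont_I vanish2.
Proof.
  apply admissible_Form_cont; [intros t Ht; cont_tac|].
  rewrite tan_0; ring.
Qed.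

Lemma admissible_csc_dsec : admissible [Form cscf; Form dsec] cont_I vanish2.
Proof.
  apply (admissible_cons _ _ _ vanish2); [apply admissible_Form_csc|apply admissible_Form_dsec].
Qed.

Lemma admissible_1_dsec : admissible [Form (fun _ => 1); Form dsec] cont_I vanish2.
Proof.
  apply (admissible_cons _ _ _ vanish1); [apply admissible_Form_1|].
  apply (admissible_weaken _ _ _ _ _ admissible_Form_dsec); auto using vanish2_vanish1.
Qed.

Lemma admissible_csc_cot s : admissible (Mul cscf :: Fs s) vanish2 cont_I.
Proof.
  apply (admissible_cons _ _ _ vanish2); [apply admissible_Mul_csc|apply admissible_cot2].
Qed.

Lemma admissible_L2nm1_word m :
  admissible (Mul sin :: repeat (Form cotf) m ++ [Form (fun t => 1 / tan t ^ 2); Form tansec])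
    cont_I cont_I.
Proof.
  apply (admissible_cons _ _ _ cont_I); [apply admissible_Mul_cont; intros t _; cont_tac|].
  apply (admissible_app _ _ _ vanish1).
  - apply (admissible_weaken _ _ _ _ _ (admissible_cot1 m)); auto using cont_I_vanish1.
  - apply (admissible_cons _ _ _ tansec_primitive);
      [apply admissible_Form_itan2|apply admissible_Form_tansec].
Qed.

Lemma admissible_lam l s : forall cw, In cw (lam l s) -> admissible (snd cw) cont_I cont_I.
Proof.
  assert (W : forall w, admissible w cont_I vanish2 -> admissible w cont_I cont_I)
    by (intros w Hw; apply (admissible_weaken _ _ _ _ _ Hw); auto using cont_I_vanish2).
  assert (Cot : forall w, admissible w cont_I vanish2 -> admissible (Fs s ++ w) cont_I cont_I)
    by (intros w Hw; apply W, (admissible_app _ _ _ vanish2); [apply admissible_cot2|exact Hw]).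
  assert (Csc : forall w, admissible w cont_I vanish2 ->
                  admissible (Mul cscf :: Fs s ++ w) cont_I cont_I)
    by (intros w Hw; apply (admissible_app (Mul cscf :: Fs s) _ _ vanish2);
        [apply admissible_csc_cot|exact Hw]).
  destruct l; unfold lam; intros cw Hcw.
  1,2: destruct Hcw as [<-|[<-|[]]]; unfold snd.
  - apply Cot, admissible_Form_tan.
  - apply Cot, admissible_csc_dsec.
  - apply Csc, admissible_Form_sin_tan.
  - apply Csc, admissible_1_dsec.
  - destruct s as [|[|s]]; destruct Hcw as [<-|[]]; unfold snd; try apply admissible_L2nm1_word.
    apply (admissible_cons _ _ _ cont_I); [apply admissible_Mul_cont; intros t _; cont_tac|].
    apply W, admissible_Form_cont; [exact cont_I_tansec|unfold tansec; rewrite tan_0; ring].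
Qed.

(** * The action of lambda_(l,s) on power series in sin^2 t *)

Lemma poly_bounded_lam_coef l s g : poly_bounded g -> poly_bounded (lam_coef l s g).
Proof.
  intros Hg; apply poly_bounded_div; [apply poly_bounded_psum, Hg|].
  intros [|k]; [left; reflexivity|right].
  rewrite <- RPow_abs; apply pow_R1_Rle; unfold lval; rewrite S_INR; pose proof (pos_INR k).
  destruct l; rewrite Rabs_pos_eq; lra.
Qed.

Lemma iintf_cot_sin_series m h y : poly_bounded h -> h O = 0 -> inI y ->
  iintf (repeat (Form cotf) m) (sin_series h) y
  = sin_series (fun k => h k / (2 * INR k) ^ m) y.
Proof.
  revert h y; induction m as [|m IH]; intros h y Hh H0 Hy; simpl.
  - apply sin_series_ext; intros k; field.
  - set (h' := fun k => h k / (2 * INR k) ^ m).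
    assert (Hh' : poly_bounded h').
    { apply poly_bounded_div; [exact Hh|]; intros [|k]; [left; exact H0|right].
      rewrite <- RPow_abs; apply pow_R1_Rle; rewrite S_INR, Rabs_pos_eq;
        pose proof (pos_INR k); lra. }
    assert (H0' : h' O = 0) by (unfold h'; rewrite H0; unfold Rdiv; ring).
    rewrite (RInt_ext_R _ (fun t => cotf t * sin_series h' t))
      by (intros t Ht; destruct (inI_between0_open y t Hy Ht); rewrite IH; auto).
    rewrite (is_RInt_unique _ _ _ _ (is_RInt_cot_sin_series h' y Hh' H0' Hy)).
    apply sin_series_ext; intros [|k]; unfold h'; [rewrite H0; unfold Rdiv; ring|].
    rewrite S_INR; pose proof (pos_INR k).
    assert ((2 * (INR k + 1)) ^ m <> 0) by (apply pow_nonzero; lra).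
    field; lra.
Qed.

Lemma iintf_cot_sin_mul_sin_series m h y : poly_bounded h -> inI y ->
  iintf (repeat (Form cotf) m) (fun t => sin t * sin_series h t) y
  = sin y * sin_series (fun k => h k / (2 * INR k + 1) ^ m) y.
Proof.
  revert h y; induction m as [|m IH]; intros h y Hh Hy; simpl.
  - f_equal; apply sin_series_ext; intros k; field.
  - set (h' := fun k => h k / (2 * INR k + 1) ^ m).
    assert (Hh' : poly_bounded h').
    { apply poly_bounded_div; [exact Hh|]; intros k; right.
      rewrite <- RPow_abs; apply pow_R1_Rle; rewrite Rabs_pos_eq; pose proof (pos_INR k); lra. }
    rewrite (RInt_ext_R _ (fun t => cos t * sin_series h' t)).
    2: { intros t Ht; destruct (inI_between0_open y t Hy Ht); rewrite IH by auto.
         fold h'; unfold cotf; field; apply sin_neq0_inI; auto. }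
    rewrite (is_RInt_unique _ _ _ _ (is_RInt_cos_sin_series h' y Hh' Hy)).
    f_equal; apply sin_series_ext; intros k; unfold h'; pose proof (pos_INR k).
    assert ((2 * INR k + 1) ^ m <> 0) by (apply pow_nonzero; lra).
    field; lra.
Qed.

Lemma RInt_sub_ext (A B C : R -> R) a b IC : ex_RInt A a b -> is_RInt C a b IC ->
  (forall u, Rmin a b < u < Rmax a b -> B u = A u - C u) -> RInt A a b - RInt B a b = IC.
Proof.
  intros XA HC E; rewrite (RInt_ext_R B (fun u => A u - C u)) by exact E.
  rewrite (is_RInt_unique (V := R_CompleteNormedModule) (fun u => A u - C u) a b
             (RInt A a b - IC)); [ring|].
  apply (is_RInt_minus (V := R_CompleteNormedModule) A C); [|exact HC].
  apply (RInt_correct (V := R_CompleteNormedModule)), XA.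
Qed.

Lemma lin_iintf_sub (p u v : word) (A B : (R -> R) -> Prop) g y :
  admissible p A B -> A (iintf u g) -> A (iintf v g) -> inI y ->
  lin_iintf [(1, p ++ u); (-1, p ++ v)] g y = iintf p (fun t => iintf u g t - iintf v g t) y.
Proof.
  intros Hp Hu Hv Hy; cbn [lin_iintf fold_right fst snd]; rewrite !iintf_app.
  rewrite (iintf_local p (fun t => iintf u g t - iintf v g t)
             (fun t => -1 * iintf v g t + iintf u g t)) by (auto; intros; ring).
  rewrite (admissible_linear _ _ _ Hp) by auto; ring.
Qed.

Lemma tansec_eq_dsec : tansec = dsec.
Proof. apply functional_extensionality; intros t; unfold dsec, tansec; ring. Qed.

Lemma RInt_dsec_sin_series g u : poly_bounded g -> inI u ->
  RInt (fun v => dsec v * sin_series g v) 0 u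
  = sin u ^ 2 / cos u * sin_series g u - cos u * sin_series (psum g) u.
Proof. intros; apply is_RInt_unique, is_RInt_dsec_sin_series; assumption. Qed.

Lemma iintf_L2n_difference g t : poly_bounded g -> inI t ->
  iintf [Form tan] (sin_series g) t - iintf [Form cscf; Form dsec] (sin_series g) t
  = sin_series (fun k => psum g k / (2 * INR k)) t.
Proof.
  intros Hg Ht; cbn [iintf]; pose proof (poly_bounded_psum g Hg) as HG.
  apply (RInt_sub_ext _ _ (fun u => cotf u * sin_series (psum g) u)).
  - apply ex_RInt_cont_I; auto using inI_0.
    intros u Hu; pose proof (cont_I_sin_series g Hg); cont_tac.
  - apply is_RInt_cot_sin_series; auto.
  - intros u Hu; destruct (inI_between0_open t u Ht Hu) as [HuI Hu0].
    pose proof (sin_neq0_inI u HuI Hu0); pose proof (cos_pos_inI u HuI).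
    rewrite RInt_dsec_sin_series by auto; unfold cscf, cotf, tan; field; lra.
Qed.

Lemma iintf_L2n1_difference g t : poly_bounded g -> inI t ->
  iintf [Form (fun t => sin t * tan t)] (sin_series g) t
    - iintf [Form (fun _ => 1); Form dsec] (sin_series g) t
  = sin t * sin_series (fun k => psum g k / (2 * INR k + 1)) t.
Proof.
  intros Hg Ht; cbn [iintf]; pose proof (poly_bounded_psum g Hg) as HG.
  apply (RInt_sub_ext _ _ (fun u => cos u * sin_series (psum g) u)).
  - apply ex_RInt_cont_I; auto using inI_0.
    intros u Hu; pose proof (cont_I_sin_series g Hg); cont_tac.
  - apply is_RInt_cos_sin_series; auto.
  - intros u Hu; pose proof (inI_between0 t u Ht ltac:(lra)) as HuI.
    pose proof (cos_pos_inI u HuI).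
    rewrite RInt_dsec_sin_series by auto; unfold tan; field; lra.
Qed.

Lemma iintf_L2nm1_tail g t : poly_bounded g -> inI t ->
  iintf [Form (fun t => 1 / tan t ^ 2); Form tansec] (sin_series g) t
  = sin t * sin_series (fun k => div_sin2_coef (lam_coef L2nm1 1 g) k / (2 * INR k + 1)) t.
Proof.
  intros Hg Ht; cbn [iintf].
  set (D := lam_coef L2nm1 1 g).
  assert (HD : poly_bounded D) by apply poly_bounded_lam_coef, Hg.
  assert (HD0 : D O = 0) by (unfold D, lam_coef; simpl; unfold Rdiv; ring).
  rewrite (RInt_ext_R _ (fun u => cos u * sin_series (div_sin2_coef D) u)).
  - apply is_RInt_unique, is_RInt_cos_sin_series; [poly_bounded_tac|exact Ht].
  - intros u Hu; destruct (inI_between0_open t u Ht Hu) as [HuI Hu0].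
    pose proof (sin_neq0_inI u HuI Hu0); pose proof (cos_pos_inI u HuI).
    rewrite tansec_eq_dsec, RInt_dsec_sin_series by auto.
    replace (sin u ^ 2 / cos u * sin_series g u - cos u * sin_series (psum g) u)
      with (sin_series D u / cos u)
      by (unfold D; rewrite <- cos_mul_dsec_integral by auto; field; lra).
    rewrite <- (sin_series_ext (mul_sin2_coef (div_sin2_coef D)) D)
      by apply mul_sin2_coef_div, HD0.
    rewrite <- sin_series_mul_sin2; unfold tan; field; lra.
Qed.

Lemma poly_bounded_psum_div_lval l g : poly_bounded g ->
  poly_bounded (fun k => psum g k / lval l k).
Proof.
  intros Hg; apply (poly_bounded_ext (lam_coef l 1 g)), poly_bounded_lam_coef, Hg.
  intros k; unfold lam_coef; rewrite pow_1; reflexivity.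
Qed.

Lemma lin_iintf_lam_L2n s g y : (1 <= s)%nat -> poly_bounded g -> inI y ->
  lin_iintf (lam L2n s) (sin_series g) y = sin_series (lam_coef L2n s g) y.
Proof.
  intros Hs Hg Hy; pose proof (cont_I_sin_series g Hg) as HgC; unfold lam.
  rewrite (lin_iintf_sub (Fs s) _ _ vanish2 vanish2 (sin_series g) y (admissible_cot2 _)
             (admissible_maps _ _ _ admissible_Form_tan _ HgC)
             (admissible_maps _ _ _ admissible_csc_dsec _ HgC) Hy).
  rewrite (iintf_local _ _ (sin_series (fun k => psum g k / (2 * INR k))))
    by (auto; intros; apply iintf_L2n_difference; auto).
  unfold Fs; rewrite iintf_cot_sin_series
    by first [assumption|apply (poly_bounded_psum_div_lval L2n), Hg|simpl; unfold Rdiv; ring].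
  apply sin_series_ext; intros [|k]; unfold lam_coef, lval; [simpl; unfold Rdiv; ring|].
  destruct s as [|s]; [lia|]; replace (S s - 1)%nat with s by lia; rewrite S_INR.
  pose proof (pos_INR k); assert ((2 * (INR k + 1)) ^ s <> 0) by (apply pow_nonzero; lra).
  simpl; field; lra.
Qed.

Lemma lin_iintf_lam_L2n1 s g y : (1 <= s)%nat -> poly_bounded g -> inI y ->
  lin_iintf (lam L2n1 s) (sin_series g) y = sin_series (lam_coef L2n1 s g) y.
Proof.
  intros Hs Hg Hy; pose proof (cont_I_sin_series g Hg) as HgC.
  change (lam L2n1 s) with
    [(1, (Mul cscf :: Fs s) ++ [Form (fun t => sin t * tan t)]);
     (-1, (Mul cscf :: Fs s) ++ [Form (fun _ => 1); Form dsec])].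
  rewrite (lin_iintf_sub (Mul cscf :: Fs s) _ _ vanish2 cont_I (sin_series g) y
             (admissible_csc_cot s)
             (admissible_maps _ _ _ admissible_Form_sin_tan _ HgC)
             (admissible_maps _ _ _ admissible_1_dsec _ HgC) Hy); cbn [iintf].
  rewrite (iintf_local _ _ (fun t => sin t * sin_series (fun k => psum g k / (2 * INR k + 1)) t))
    by (auto; intros; apply iintf_L2n1_difference; auto).
  unfold Fs; rewrite iintf_cot_sin_mul_sin_series
    by first [assumption|apply (poly_bounded_psum_div_lval L2n1), Hg].
  (* [cscf 0 = 1 / 0 = 0], and both sides vanish at 0. *)
  destruct (Req_dec y 0) as [->|Hy0].
  { rewrite sin_0, !sin_series_at_0; unfold lam_coef; simpl; unfold Rdiv; ring. }
  unfold cscf; rewrite <- Rmult_assoc, (Rmult_comm _ (sin y)), Rmult_div_assoc.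
  rewrite Rmult_1_r, Rdiv_diag, Rmult_1_l by (apply sin_neq0_inI; auto).
  apply sin_series_ext; intros k; unfold lam_coef, lval.
  destruct s as [|s]; [lia|]; replace (S s - 1)%nat with s by lia.
  pose proof (pos_INR k); assert ((2 * INR k + 1) ^ s <> 0) by (apply pow_nonzero; lra).
  simpl; field; lra.
Qed.

Lemma lin_iintf_lam_L2nm1 s g y : (1 <= s)%nat -> poly_bounded g -> inI y ->
  lin_iintf (lam L2nm1 s) (sin_series g) y = sin_series (lam_coef L2nm1 s g) y.
Proof.
  intros Hs Hg Hy; unfold lam; destruct s as [|[|s]]; [lia| |];
    cbn [lin_iintf fold_right fst snd iintf].
  - rewrite tansec_eq_dsec, RInt_dsec_sin_series, cos_mul_dsec_integral by auto; ring.
  - unfold Fs; replace (S (S s) - 1 - 1)%nat with s by lia; rewrite iintf_app.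
    rewrite (iintf_local _ _ (fun t => sin t * sin_series
               (fun k => div_sin2_coef (lam_coef L2nm1 1 g) k / (2 * INR k + 1)) t))
      by (auto; intros; apply iintf_L2nm1_tail; auto).
    rewrite iintf_cot_sin_mul_sin_series;
      [|apply poly_bounded_div; [poly_bounded_tac; apply poly_bounded_lam_coef, Hg|]|exact Hy].
    + transitivity (sin y ^ 2 * sin_series (fun k => div_sin2_coef (lam_coef L2nm1 1 g) k
                                                     / (2 * INR k + 1) / (2 * INR k + 1) ^ s) y);
        [ring|rewrite sin_series_mul_sin2].
      apply sin_series_ext; intros [|k]; unfold mul_sin2_coef, div_sin2_coef, lam_coef, lval;
        [simpl; unfold Rdiv; ring|].
      rewrite !S_INR; pose proof (pos_INR k).
      pose proof (cbinom_pos k); pose proof (cbinom_pos (S k)).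
      replace (2 * (INR k + 1) - 1) with (2 * INR k + 1) by ring.
      assert ((2 * INR k + 1) ^ s <> 0) by (apply pow_nonzero; lra).
      simpl; field; lra.
    + intros k; right; rewrite Rabs_pos_eq; pose proof (pos_INR k); lra.
Qed.

Lemma lin_iintf_lam l s g y : (1 <= s)%nat -> poly_bounded g -> inI y ->
  lin_iintf (lam l s) (sin_series g) y = sin_series (lam_coef l s g) y.
Proof.
  destruct l; [apply lin_iintf_lam_L2n|apply lin_iintf_lam_L2n1|apply lin_iintf_lam_L2nm1].
Qed.

Fixpoint series_coef (n : nat) (ks : list (Kind * nat)) : nat -> R :=
  match ks with
  | [] => delta n
  | p :: ks' => lam_coef (fst p) (snd p) (series_coef n ks')
  end.

Lemma poly_bounded_series_coef n ks : poly_bounded (series_coef n ks).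
Proof.
  induction ks as [|p ks IH]; [apply poly_bounded_delta|apply poly_bounded_lam_coef, IH].
Qed.

Lemma sin_series_delta n t : inI t -> sin_series (delta n) t = a_coef n (sin t).
Proof.
  intros Ht; unfold sin_series; rewrite (PSeries_decr_n _ n)
    by (apply ex_sin_series; [apply poly_bounded_delta|exact Ht]).
  rewrite (PSeries_ext _ (fun _ => 0)), PSeries_const_0, Rmult_0_r, Rplus_0_r.
  2: { intros k; unfold PS_decr_n, delta; destruct (Nat.eqb_spec (S n + k) n); [lia|ring]. }
  rewrite a_coef_cbinom; destruct n as [|m]; [unfold delta; simpl; ring|].
  simpl sum_f_R0; rewrite sum_eq_R0.
  - unfold delta; rewrite Nat.eqb_refl, <- tech_pow_Rmult.
    replace (sin t * (sin t * 1)) with (sin t ^ 2) by ring; ring.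
  - intros k Hk; unfold delta; destruct (Nat.eqb_spec k (S m)); [lia|ring].
Qed.

Lemma psum_ext (f g : nat -> R) N : (forall k, (k < N)%nat -> f k = g k) -> psum f N = psum g N.
Proof. induction N as [|N IH]; intros H; simpl; auto; rewrite IH, H; auto. Qed.

Lemma psum_zero (g : nat -> R) k : (forall j, (j < k)%nat -> g j = 0) -> psum g k = 0.
Proof.
  intros H; rewrite (psum_ext g (fun _ => 0)) by auto; clear H.
  induction k as [|k IH]; simpl; lra.
Qed.

Lemma series_coef_lt n ks j : (j < n)%nat -> series_coef n ks j = 0.
Proof.
  revert j; induction ks as [|p ks IH]; intros j Hj; simpl.
  - unfold delta; destruct (Nat.eqb_spec j n); [lia|reflexivity].
  - unfold lam_coef; rewrite psum_zero; [unfold Rdiv; ring|intros i Hi; apply IH; lia].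
Qed.

Lemma psum_delta n k : psum (delta n) k = if Nat.ltb n k then 1 else 0.
Proof.
  induction k as [|k IH]; simpl; auto; rewrite IH; unfold delta.
  destruct (Nat.ltb_spec n k), (Nat.eqb_spec k n), (Nat.ltb_spec n (S k)); try lia; ring.
Qed.

Lemma sum_between_psum f n N :
  sum_between f n N = psum (fun m => if Nat.ltb n m then f m else 0) N.
Proof. induction N as [|N IH]; simpl; auto; rewrite IH; reflexivity. Qed.

Lemma msum_series_coef n ks k : (n < k)%nat ->
  msum (map (fun p => fun m => 1 / lval (fst p) m ^ (snd p)) ks) n k = psum (series_coef n ks) k.
Proof.
  revert k; induction ks as [|q ks IH]; intros k Hk; simpl.
  - rewrite psum_delta; destruct (Nat.ltb_spec n k); [reflexivity|lia].
  - rewrite sum_between_psum; apply psum_ext; intros m Hm; destruct (Nat.ltb_spec n m).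
    + rewrite IH by assumption; unfold lam_coef, Rdiv; ring.
    + unfold lam_coef; rewrite psum_zero; [unfold Rdiv; ring|].
      intros i Hi; apply series_coef_lt; lia.
Qed.

Lemma lhs_partial_psum x p ks n N :
  lhs_partial x (p :: ks) n N = psum (fun k => series_coef n (p :: ks) k * a_coef k x) N.
Proof.
  unfold lhs_partial, weights; destruct p as [l s]; simpl msum; rewrite sum_between_psum.
  apply psum_ext; intros m _; destruct (Nat.ltb_spec n m).
  - rewrite msum_series_coef by assumption; cbn [series_coef fst snd]; unfold lam_coef, Rdiv.
    ring.
  - cbn [series_coef fst snd]; unfold lam_coef; rewrite psum_zero; [unfold Rdiv; ring|].
    intros i Hi; apply series_coef_lt; lia.
Qed.

Lemma psum_sum_n f N : psum f (S N) = sum_n f N.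
Proof.
  induction N as [|N IH]; [simpl; rewrite sum_O; ring|].
  rewrite sum_Sn; change (psum f (S (S N))) with (psum f (S N) + f (S N)).
  rewrite IH; reflexivity.
Qed.

Lemma is_lim_seq_psum_sin_series c y : poly_bounded c -> inI y ->
  is_lim_seq (fun N => psum (fun k => c k * a_coef k (sin y)) N) (sin_series c y).
Proof.
  intros Hc Hy; apply is_lim_seq_incr_1.
  assert (E : forall k, c k * a_coef k (sin y) = scal (pow_n (sin y ^ 2) k) (c k * cbinom k))
    by (intros k; change (scal ?a ?b) with (a * b);
        rewrite a_coef_cbinom, (pow_n_pow (sin y ^ 2) k); ring).
  apply (is_lim_seq_ext (sum_n (fun k => scal (pow_n (sin y ^ 2) k) (c k * cbinom k)))).
  { intros N; rewrite psum_sum_n; apply sum_n_ext; intros k; symmetry; apply E. }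
  unfold is_lim_seq, sin_series, PSeries; change (Rbar_locally (Finite ?l)) with (locally l).
  rewrite (Series_ext _ (fun k => scal (pow_n (sin y ^ 2) k) (c k * cbinom k)))
    by (intros k; change (scal ?a ?b) with (a * b); rewrite (pow_n_pow (sin y ^ 2) k); ring).
  exact (Series_correct _ (ex_sin_series c Hc y Hy)).
Qed.

Lemma in_comp cw (A B : lin) : In cw (Defs.comp A B) ->
  exists a b, In a A /\ In b B /\ cw = (fst a * fst b, snd a ++ snd b).
Proof.
  unfold Defs.comp; intros H; apply in_flat_map in H; destruct H as [a [Ha H]].
  apply in_map_iff in H; destruct H as [b [<- Hb]]; exists a, b; auto.
Qed.

Lemma admissible_lam_word ks :
  forall cw, In cw (lam_word ks) -> admissible (snd cw) cont_I cont_I.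
Proof.
  induction ks as [|[l s] ks IH]; intros cw Hcw.
  - destruct Hcw as [<-|[]]; apply admissible_nil.
  - destruct (in_comp _ _ _ Hcw) as [a [b [Ha [Hb ->]]]]; simpl snd.
    apply (admissible_app _ _ _ cont_I); [apply (admissible_lam l s), Ha|apply IH, Hb].
Qed.

Lemma lin_iintf_lam_word n ks y : (forall p, In p ks -> (1 <= snd p)%nat) -> inI y ->
  lin_iintf (lam_word ks) (sin_series (delta n)) y = sin_series (series_coef n ks) y.
Proof.
  revert y; induction ks as [|[l s] ks IH]; intros y Hs Hy; [simpl; ring|].
  change (lam_word ((l, s) :: ks)) with (Defs.comp (lam l s) (lam_word ks)).
  rewrite lin_iintf_comp; [|exact (admissible_lam l s)| |exact Hy].
  - rewrite (lin_iintf_local _ _ (sin_series (series_coef n ks)))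
      by (auto; intros; apply IH; auto; intros; apply Hs; right; assumption).
    apply lin_iintf_lam; [apply (Hs (l, s)), in_eq|apply poly_bounded_series_coef|exact Hy].
  - intros cw Hcw; apply (admissible_maps _ _ _ (admissible_lam_word ks cw Hcw)).
    apply cont_I_sin_series, poly_bounded_delta.
Qed.

Lemma rhs_sin_sin_series ks n y : (forall p, In p ks -> (1 <= snd p)%nat) -> inI y ->
  rhs_sin ks n y = sin_series (series_coef n ks) y.
Proof.
  intros Hs Hy; unfold rhs_sin; rewrite lin_iint_comp_Mul, <- lin_iintf_lam_word by assumption.
  apply lin_iintf_local; auto; intros t Ht; symmetry; apply sin_series_delta, Ht.
Qed.

Lemma lin_iintf_subst (A : lin) g gx x :
  (forall cw, In cw A -> admissible (snd cw) cont_I cont_I) -> cont_I g ->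
  (forall u, -1 < u < 1 -> gx u = g (asin u)) -> -1 < x < 1 ->
  lin_iintf (subst_lin A) gx x = lin_iintf A g (asin x).
Proof.
  intros HA Hg Hgx Hx; induction A as [|a A IH]; simpl; auto.
  rewrite IH by (intros; apply HA; right; assumption).
  do 2 f_equal; apply (admissible_asin _ _ _ (HA a (in_eq a A))); assumption.
Qed.

Lemma rhs_x_asin ks n x : -1 < x < 1 -> rhs_x ks n x = rhs_sin ks n (asin x).
Proof.
  intros Hx; unfold rhs_x, rhs_sin; rewrite !lin_iint_comp_Mul.
  apply lin_iintf_subst; [exact (admissible_lam_word ks)| | |exact Hx].
  - intros t Ht; apply (continuous_comp sin (a_coef n)); [apply continuous_sin|].
    destruct n; [apply continuous_const|].
    apply (continuous_mult (fun _ => _) (fun u => u ^ _)); [apply continuous_const|].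
    apply continuous_pow_comp, continuous_id.
  - intros u Hu; rewrite sin_asin by lra; reflexivity.
Qed.

Lemma is_lim_seq_lhs_partial ks n y : ks <> [] -> inI y ->
  is_lim_seq (fun N => lhs_partial (sin y) ks n N) (sin_series (series_coef n ks) y).
Proof.
  intros Hne Hy; destruct ks as [|p ks]; [contradiction|].
  apply (is_lim_seq_ext
           (fun N => psum (fun k => series_coef n (p :: ks) k * a_coef k (sin y)) N)).
  - intros N; symmetry; apply lhs_partial_psum.
  - apply is_lim_seq_psum_sin_series; [apply poly_bounded_series_coef|exact Hy].
Qed.

Theorem theorem5p1 (ks : list (Kind * nat)) :
  ks <> [] ->
  (forall p, In p ks -> (1 <= snd p)%nat) ->
  (forall p, In p (tl ks) -> fst p <> L2nm1) ->
  (forall (y : R) (n : nat), - (PI / 2) < y < PI / 2 ->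
     is_lim_seq (fun N => lhs_partial (sin y) ks n N) (Finite (rhs_sin ks n y))) /\
  (forall (x : R) (n : nat), -1 < x < 1 ->
     is_lim_seq (fun N => lhs_partial x ks n N) (Finite (rhs_x ks n x))).
Proof.
  intros Hne Hs _.
  assert (Hsin : forall (y : R) (n : nat), inI y ->
            is_lim_seq (fun N => lhs_partial (sin y) ks n N) (Finite (rhs_sin ks n y))).
  { intros y n Hy; rewrite rhs_sin_sin_series by assumption.
    apply is_lim_seq_lhs_partial; assumption. }
  split; [exact Hsin|].
  intros x n Hx; rewrite rhs_x_asin by assumption.
  pose proof (Hsin (asin x) n (inI_asin x Hx)) as H; rewrite sin_asin in H by lra; exact H.
Qed.
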